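(* Let $(\mathcal{A},\mathbb{E})$ be a $B$-valued probability space, $\chi:[n]\to\{\mathcal{F},\mathcal{B}\}$, $\pi\in INC(\chi)$ and $a_1,\dots,a_n\in\mathcal{A}$. Suppose $V=\{l+1,l+2,\dots,l+s\}$ is an interval block of $\pi$ and let $V'=[n]\setminus V$. Then $$\kappa_{\chi,\pi}(a_1,\dots,a_n)=\kappa_{\chi|_{V'},\pi|_{V'}}\big(a_1,\dots,a_l,\kappa_{\chi|_V,1_V}(a_{l+1},\dots,a_{l+s})a_{l+s+1},\dots,a_n\big)=\kappa_{\chi|_{V'},\pi|_{V'}}\big(a_1,\dots,a_l\kappa_{\chi|_V,1_V}(a_{l+1},\dots,a_{l+s}),a_{l+s+1},\dots,a_n\big).$$
   Context: $B$ is a unital complex algebra; a $B$-valued probability space is a pair $(\mathcal{A},\mathbb{E})$ with $\mathcal{A}$ a unital algebra containing $B$ and $\mathbb{E}:\mathcal{A}\to B$ linear with $\mathbb{E}(b_1ab_2)=b_1\mathbb{E}(a)b_2$. For a finite linearly ordered set $S$ and $\chi:S\to\{\mathcal{F},\mathcal{B}\}$, $INC(\chi)$ is the set of noncrossing partitions $\pi$ of $S$ such that whenever $v_1<w<v_2$, $v_1,v_2$ are in the same block and $\chi(w)=\mathcal{B}$, then $w$ is in that block; it is ordered by reverse refinement ($\sigma\le\pi$ iff every block of $\sigma$ lies in a block of $\pi$), $\mu_{INC}$ is its Möbius function, and $1_S$ is the one-block partition. Restrictions $\chi|_W$, $\pi|_W$ to a subset $W$ are taken with the induced order. For a noncrossing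 $\sigma$ of $[n]$ and $a_1,\dots,a_n\in\mathcal{A}$, $\Phi_\sigma(a_1,\dots,a_n)\in B$ is defined recursively: $\Phi_{1_n}(a_1,\dots,a_n)=\mathbb{E}(a_1\cdots a_n)$ and, if $W=\{l+1,\dots,l+s\}$ is an interval block of $\sigma$, $\Phi_\sigma(a_1,\dots,a_n)=\Phi_{\sigma\setminus\{W\}}(a_1,\dots,a_l,\mathbb{E}(a_{l+1}\cdots a_{l+s})a_{l+s+1},\dots,a_n)$. The free-Boolean cumulant is $\kappa_{\chi,\pi}(a_1,\dots,a_n)=\sum_{\sigma\in INC(\chi),\sigma\le\pi}\mu_{INC}(\sigma,\pi)\Phi_\sigma(a_1,\dots,a_n)$. *)

From HB Require Import structures.
From mathcomp Require Import all_boot all_order all_algebra.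
From mathcomp Require Import reals.
From mathcomp.real_closed Require Export complex.
Set Implicit Arguments. Unset Strict Implicit. Unset Printing Implicit Defensive.
Import Order.TTheory GRing.Theory Num.Theory.
Local Open Scope ring_scope.

(* The two colours: F = free (\mathcal F), Bo = Boolean (\mathcal B). *)
Inductive FB := F | Bo.
Definition isB (c : FB) : bool := if c is Bo then true else false.

Section Partitions.
Variable n : nat.
Implicit Types (S W : {set 'I_n}) (P Q : {set {set 'I_n}}) (chi : 'I_n -> FB).

Definition noncrossing P : bool :=
  [forall X in P, forall Y in P, forall a : 'I_n, forall b : 'I_n,
    forall c : 'I_n, forall d : 'I_n,
    ([&& a \in X, c \in X, b \in Y, d \in Y & (a < b < c)%N && (c < d)%N])
      ==> (X == Y)].

Definition inc_cond S chi P : bool :=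
  [forall X in P, forall v1 in X, forall v2 in X, forall w in S,
    ((v1 < w < v2)%N && isB (chi w)) ==> (w \in X)].

Definition INC S chi P : bool :=
  [&& partition P S, noncrossing P & inc_cond S chi P].

Definition refines P Q : bool := [forall X in P, exists Y in Q, X \subset Y].

Definition part_restrict P W : {set {set 'I_n}} :=
  [set X :&: W | X in P & X :&: W != set0].

Definition is_interval S W : bool :=
  [forall x in S, forall y in W, forall z in W, (y <= x <= z)%N ==> (x \in W)].

Definition next_after S W : option 'I_n :=
  [pick j in S | [forall w in W, (w < j)%N] &&
     [forall x in S, [forall w in W, (w < x)%N] ==> (j <= x)%N]].
End Partitions.

(* The fuel #|T| exceeds the length of every strict chain, so this is the
   genuine Moebius function whenever le is a partial order on dom. *)
Section Mobius.
Variables (T : finType) (dom : pred T) (le : rel T).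
Fixpoint mobius_fuel (k : nat) (x y : T) : int :=
  match k with
  | 0 => (x == y)%:Z
  | k'.+1 =>
    if x == y then 1
    else if le x y then
      - \sum_(z | [&& dom z, le x z, le z y & z != y]) mobius_fuel k' x z
    else 0
  end.
Definition mobius (x y : T) : int := mobius_fuel #|T| x y.
End Mobius.

Section Cumulants.
Variables (R : realType) (Bt A : algType R[i]).
Variables (iota : Bt -> A) (E : A -> Bt).
Variable n : nat.

Fixpoint Phi_fuel (k : nat) (S : {set 'I_n}) (sigma : {set {set 'I_n}})
    (a : 'I_n -> A) : Bt :=
  match k with
  | 0 => E (\prod_(i <- enum S) a i)
  | k'.+1 =>
    match [pick W in sigma | is_interval S W && (next_after S W != None)] with
    | None => E (\prod_(i <- enum S) a i)
    | Some W =>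
      match next_after S W with
      | None => E (\prod_(i <- enum S) a i)
      | Some j =>
        Phi_fuel k' (S :\: W) (sigma :\ W)
          (fun i => if i == j then iota (E (\prod_(w <- enum W) a w)) * a i
                    else a i)
      end
    end
  end.

Definition Phi (S : {set 'I_n}) (sigma : {set {set 'I_n}}) (a : 'I_n -> A) : Bt := Phi_fuel #|sigma| S sigma a.

Definition kappa (S : {set 'I_n}) (chi : 'I_n -> FB) (pi : {set {set 'I_n}})
    (a : 'I_n -> A) : Bt :=
  \sum_(sigma : {set {set 'I_n}} | INC S chi sigma && refines sigma pi)
     Phi S sigma a *~ mobius (INC S chi) (@refines n) sigma pi.
End Cumulants.

From HB Require Import structures.
From mathcomp Require Import all_boot all_order all_algebra.
From mathcomp Require Import reals.
From mathcomp.real_closed Require Import complex.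
From mathcomp Require Import zify.

Set Implicit Arguments.
Unset Strict Implicit.
Unset Printing Implicit Defensive.
Import Order.TTheory GRing.Theory Num.Theory.

(* Splitting the blocks of sigma <= pi into those inside the interval block V and
   those inside its complement V' is an isomorphism of the interval [0, pi] of
   INC(chi) with the product [0, 1_V] x [0, pi|V'], so the Moebius function factors:
   mu(sigma, pi) = mu(sigma|V, 1_V) mu(sigma|V', pi|V').  The recursion defining
   Phi_sigma may contract the interval blocks in any order, so the blocks inside V
   can be contracted first, and Phi_sigma(a) becomes Phi_(sigma|V') applied to a with
   a_(l+s+1) replaced by Phi_(sigma|V)(a_(l+1), ..., a_(l+s)) a_(l+s+1).  A left
   multiplier of an element may be moved to a right multiplier of the preceding
   element, which gives the second form.  Summing first over sigma|V, using that
   Phi_(sigma|V') is additive in one entry, produces kappa_(chi|V, 1_V). *)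

(** * Partitions, intervals and neighbours *)

Lemma setDDC (T : finType) (S B C : {set T}) : S :\: B :\: C = S :\: C :\: B.
Proof. by rewrite !setDDl setUC. Qed.

Lemma setD1Ul (T : finType) (P1 P2 : {set T}) W : W \notin P2 ->
  (P1 :|: P2) :\ W = (P1 :\ W) :|: P2.
Proof.
move=> WP2; apply/setP => X; rewrite !inE.
by case: (X =P W) => [->|_] /=; rewrite ?(negbTE WP2).
Qed.

Lemma card_setD1_lt (T : finType) (P : {set T}) W k :
  (#|P| < k.+1)%N -> W \in P -> (#|P :\ W| < k)%N.
Proof. by move=> H WP; move: H; rewrite (cardsD1 W P) WP. Qed.

Section Partitions.
Variable n : nat.
Implicit Types (S W V X Y : {set 'I_n}) (P Q : {set {set 'I_n}}).

Lemma partition_block_eq S P X Y x : partition P S ->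
  X \in P -> Y \in P -> x \in X -> x \in Y -> X = Y.
Proof.
move=> /partition_trivIset tP XP YP xX xY.
by rewrite -(def_pblock tP XP xX) (def_pblock tP YP xY).
Qed.

Lemma partition_disjoint S P X Y : partition P S ->
  X \in P -> Y \in P -> X != Y -> [disjoint X & Y].
Proof. by move/partition_trivIset/trivIsetP; apply. Qed.

Lemma partition_cover S P x : partition P S -> x \in S -> exists2 X, X \in P & x \in X.
Proof. by move=> /cover_partition <- /bigcupP[X XP xX]; exists X. Qed.

Lemma partition_block_neq0 S P X : partition P S -> X \in P -> exists x, x \in X.
Proof. by move=> partP /(partition_neq0 partP) /set0Pn. Qed.

Lemma partitionU S V P1 P2 : partition P1 V -> partition P2 (S :\: V) ->
  V \subset S -> partition (P1 :|: P2) S.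
Proof.
move=> part1 part2 VS; apply/and3P; split.
- rewrite /cover bigcup_setU -!/(cover _) (cover_partition part1).
  by rewrite (cover_partition part2) -[X in _ == X](setID S V) (setIidPr VS).
- apply: trivIsetU; rewrite ?(partition_trivIset part1) ?(partition_trivIset part2) //.
  rewrite (cover_partition part1) (cover_partition part2).
  rewrite -setI_eq0; apply/eqP/setP => x; rewrite !inE.
  by case: (x \in V); rewrite ?andbF.
- by rewrite inE negb_or (partition0 part1) (partition0 part2).
Qed.

Lemma partition_cover_sub S P Q : partition P S -> Q \subset P -> partition Q (cover Q).
Proof.
move=> partP QP; apply/and3P; split => //; first exact: trivIsetS QP (partition_trivIset partP).
by apply: contraFN (partition0 partP); apply: (subsetP QP).
Qed.

Lemma partition_card_le1 V P : partition P V -> (#|P| <= 1)%N ->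
  (exists x, x \in V) -> P = [set V].
Proof.
move=> partP cP [x xV]; have [X XP xX] := partition_cover partP xV.
have PX : P = [set X] by apply/esym/eqP; rewrite eqEcard sub1set XP cards1 cP.
by rewrite -(cover_partition partP) PX cover1.
Qed.

Lemma noncrossingP P : reflect
  (forall X Y (a b c d : 'I_n), X \in P -> Y \in P -> a \in X -> c \in X ->
     b \in Y -> d \in Y -> (a < b)%N -> (b < c)%N -> (c < d)%N -> X = Y)
  (noncrossing P).
Proof.
apply: (iffP forall_inP) => [H X Y a b c d XP YP aX cX bY dY ab bc cd|H X XP].
  move: (H X XP) => /forall_inP /(_ Y YP) /forallP /(_ a) /forallP /(_ b).
  move=> /forallP /(_ c) /forallP /(_ d) /implyP.
  by rewrite aX cX bY dY ab bc cd => /(_ isT) /eqP.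
apply/forall_inP => Y YP; apply/forallP => a; apply/forallP => b.
apply/forallP => c; apply/forallP => d; apply/implyP.
by case/and5P => aX cX bY dY /andP[/andP[ab bc] cd]; apply/eqP; apply: (H X Y a b c d).
Qed.

Lemma noncrossingS P P' : P' \subset P -> noncrossing P -> noncrossing P'.
Proof.
move=> sub /noncrossingP H; apply/noncrossingP => X Y a b c d XP YP.
by apply: H; apply: (subsetP sub).
Qed.

Lemma intervalP S W : reflect (forall x y z, x \in S -> y \in W -> z \in W ->
   (y <= x)%N -> (x <= z)%N -> x \in W) (is_interval S W).
Proof.
apply: (iffP forall_inP) => [H x y z xS yW zW yx xz|H x xS].
  by move: (H x xS) => /forall_inP /(_ y yW) /forall_inP /(_ z zW) /implyP; apply; rewrite yx.
apply/forall_inP => y yW; apply/forall_inP => z zW.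
by apply/implyP => /andP[]; apply: H.
Qed.

Lemma intervalS S S' W : S' \subset S -> is_interval S W -> is_interval S' W.
Proof.
move=> sub /intervalP H; apply/intervalP => x y z xS; apply: H.
exact: (subsetP sub).
Qed.

Lemma interval_trans S V W : is_interval S V -> W \subset V -> is_interval V W ->
  is_interval S W.
Proof.
move=> /intervalP VI WV /intervalP WI; apply/intervalP => x y z xS yW zW yx xz.
by apply: (WI x y z) => //; apply: (VI x y z) => //; apply: (subsetP WV).
Qed.

Lemma interval_setD S V W : is_interval S V -> is_interval (S :\: W) (V :\: W).
Proof.
move=> /intervalP VI; apply/intervalP => x y z; rewrite !inE.
move=> /andP[xW xS] /andP[_ yV] /andP[_ zV] yx xz; rewrite xW /=.
exact: (VI x y z).
Qed.

Definition is_next S W t :=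
  [/\ t \in S, forall w, w \in W -> (w < t)%N &
      forall x, x \in S -> (forall w, w \in W -> (w < x)%N) -> (t <= x)%N].

Definition is_prev S W p :=
  [/\ p \in S, forall w, w \in W -> (p < w)%N &
      forall x, x \in S -> (forall w, w \in W -> (x < w)%N) -> (x <= p)%N].

Definition final S W := forall x, x \in S -> ~ (forall w, w \in W -> (w < x)%N).

Definition consec S (p j : 'I_n) :=
  [/\ p \in S, j \in S, (p < j)%N & forall x, x \in S -> ~~ ((p < x)%N && (x < j)%N)].

Lemma next_afterP S W t : next_after S W = Some t <-> is_next S W t.
Proof.
rewrite /next_after; split.
  case: pickP => [j /and3P[jS /forall_inP H1 /forall_inP H2] [<-]|//].
  split=> // x xS Hx.
  by move/implyP: (H2 x xS); apply; apply/forall_inP.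
case=> tS tW tmin; case: pickP => [j /and3P[jS /forall_inP H1 /forall_inP H2]|H].
  congr Some; apply/val_inj/eqP; rewrite eqn_leq (tmin j jS H1) andbT.
  by move/implyP: (H2 t tS); apply; apply/forall_inP.
have := H t; rewrite tS /=; move/negbT; rewrite negb_and => /orP[] /negP[].
  exact/forall_inP.
by apply/forall_inP => x xS; apply/implyP => /forall_inP; apply: tmin.
Qed.

Lemma is_next_uniq S W t t' : is_next S W t -> is_next S W t' -> t = t'.
Proof. by move=> /next_afterP H1 /next_afterP; rewrite H1 => -[]. Qed.

Lemma is_next_notin S W t : is_next S W t -> t \notin W.
Proof. by case=> _ tW _; apply/negP => /tW; rewrite ltnn. Qed.

Lemma is_prev_notin S W p : is_prev S W p -> p \notin W.
Proof. by case=> _ pW _; apply/negP => /pW; rewrite ltnn. Qed.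

Lemma exists_next S W x : x \in S -> (forall w, w \in W -> (w < x)%N) ->
  exists t, is_next S W t.
Proof.
move=> xS Hx; pose Q := [pred y | (y \in S) && [forall w in W, (w < y)%N]].
have Qx : Q x by rewrite /Q /= xS; apply/forall_inP.
case: (arg_minnP (fun y : 'I_n => nat_of_ord y) Qx) => t /andP[tS /forall_inP tW] tmin.
by exists t; split=> // y yS Hy; apply: tmin; rewrite /= yS; apply/forall_inP.
Qed.

Lemma exists_prev S W x : x \in S -> (forall w, w \in W -> (x < w)%N) ->
  exists p, is_prev S W p.
Proof.
move=> xS Hx; pose Q := [pred y | (y \in S) && [forall w in W, (y < w)%N]].
have Qx : Q x by rewrite /Q /= xS; apply/forall_inP.
case: (arg_maxnP (fun y : 'I_n => nat_of_ord y) Qx) => p /andP[pS /forall_inP pW] pmax.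
by exists p; split=> // y yS Hy; apply: pmax; rewrite /= yS; apply/forall_inP.
Qed.

Lemma next_after_None S W : next_after S W = None -> final S W.
Proof.
move=> H x xS Hx; have [t Wt] := exists_next xS Hx.
by rewrite ((next_afterP _ _ _).2 Wt) in H.
Qed.

Lemma is_prev_next_consec S V p j : is_interval S V -> is_prev S V p -> is_next S V j ->
  (exists v, v \in V) -> consec (S :\: V) p j.
Proof.
move=> /intervalP VI [pS pV pmax] [jS jV jmin] [v vV]; split.
- by rewrite inE pS andbT; apply/negP => /pV; rewrite ltnn.
- by rewrite inE jS andbT; apply/negP => /jV; rewrite ltnn.
- exact: ltn_trans (pV v vV) (jV v vV).
move=> x /setDP[xS xV]; apply/negP => /andP[px xj].
have [/forall_inP H|/forall_inPn[w wV]] := boolP [forall w in V, (x < w)%N].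
  by have := pmax x xS H; rewrite leqNgt px.
rewrite -leqNgt => wx.
have [/forall_inP H|/forall_inPn[w' w'V]] := boolP [forall w in V, (w < x)%N].
  by have := jmin x xS H; rewrite leqNgt xj.
rewrite -leqNgt => xw'.
by have := VI x w w' xS wV w'V wx xw'; rewrite (negbTE xV).
Qed.

Lemma is_next_setD S W X t : is_next S W t -> t \notin X -> is_next (S :\: X) W t.
Proof.
case=> tS tW tmin tX; split => //; first by rewrite inE tX.
by move=> x /setDP[xS _]; apply: tmin.
Qed.

Lemma is_prev_setD S W X p : is_prev S W p -> p \notin X -> is_prev (S :\: X) W p.
Proof.
case=> pS pW pmax pX; split => //; first by rewrite inE pX.
by move=> x /setDP[xS _]; apply: pmax.
Qed.

Lemma final_setD S W X : final S W -> final (S :\: X) W.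
Proof. by move=> fin x /setDP[/fin]. Qed.

Lemma consecS S S' p j : consec S p j -> S' \subset S -> p \in S' -> j \in S' ->
  consec S' p j.
Proof.
by case=> _ _ pj H sub pS jS; split => // x xS; apply: H; apply: (subsetP sub).
Qed.

Lemma is_next_neq S W W0 t t0 : W \subset S -> W0 \subset S ->
  is_interval S W -> is_interval S W0 -> [disjoint W & W0] ->
  (exists w, w \in W) -> (exists w, w \in W0) ->
  is_next S W t -> is_next S W0 t0 -> t != t0.
Proof.
move=> WS W0S /intervalP WI /intervalP W0I dis [w wW] [w0 w0W0].
move=> [tS tW tmin] [t0S t0W t0min]; apply/eqP => tt0; subst t0.
have ww0 : w != w0 by apply: contraTneq wW => ->; rewrite (disjointFl dis w0W0).
case: (ltngtP w w0) => [lt|lt|/val_inj e]; last by rewrite e eqxx in ww0.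
- have H w' : w' \in W -> (w' < w0)%N.
    move=> w'W; rewrite ltnNge; apply/negP => w0w'.
    have : w0 \in W by apply: (WI w0 w w') => //; [exact: (subsetP W0S) | exact: ltnW].
    by rewrite (disjointFl dis w0W0).
  by have := leq_trans (t0W w0 w0W0) (tmin w0 (subsetP W0S _ w0W0) H); rewrite ltnn.
- have H w' : w' \in W0 -> (w' < w)%N.
    move=> w'W0; rewrite ltnNge; apply/negP => ww'.
    have : w \in W0 by apply: (W0I w w0 w') => //; [exact: (subsetP WS) | exact: ltnW].
    by rewrite (disjointFr dis wW).
  by have := leq_trans (tW w wW) (t0min w (subsetP WS _ wW) H); rewrite ltnn.
Qed.

Lemma is_next_block_min S W W0 t : is_next S W t -> W \subset S -> W0 \subset S ->
  is_interval S W0 -> t \in W0 -> [disjoint W & W0] ->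
  forall x, x \in W0 -> (t <= x)%N.
Proof.
move=> [tS tW tmin] WS W0S /intervalP W0I tW0 dis x xW0.
rewrite leqNgt; apply/negP => xt; have xS := subsetP W0S x xW0.
case: (boolP [forall w in W, (w < x)%N]) => [/forall_inP H|].
  by have := tmin x xS H; rewrite leqNgt xt.
move/forall_inPn => [w wW]; rewrite -leqNgt => xw.
have : w \in W0.
  by apply: (W0I w x t) => //; [exact: (subsetP WS w wW) | exact: ltnW (tW w wW)].
by rewrite (disjointFr dis wW).
Qed.

Lemma is_next_shift S W W0 t t0 : is_next S W t -> t \in W0 -> is_next S W0 t0 ->
  is_interval S W0 -> is_next (S :\: W0) W t0.
Proof.
move=> [tS tW tmin] tW0 [t0S t0W0 t0min] /intervalP W0I; split.
- by rewrite inE t0S andbT; apply/negP => /t0W0; rewrite ltnn.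
- by move=> w wW; apply: ltn_trans (tW w wW) (t0W0 t tW0).
- move=> x /setDP[xS xW0] Hx; have tx := tmin x xS Hx.
  case: (boolP [forall y in W0, (y < x)%N]) => [/forall_inP H|]; first exact: t0min.
  move/forall_inPn => [y yW0]; rewrite -leqNgt => xy.
  by have := W0I x t y xS tW0 yW0 tx xy; rewrite (negbTE xW0).
Qed.

Lemma consec_next_neq S W p j t : consec S p j -> W \subset S -> (exists w, w \in W) ->
  is_next S W t -> p \notin W -> t != j.
Proof.
case=> pS jS pj Hc WS [w wW] [tS tW tmin] pW; apply/eqP => tj; subst t.
case: (boolP [forall w in W, (w < p)%N]) => [/forall_inP H|].
  by have := tmin p pS H; rewrite leqNgt pj.
move/forall_inPn => [w' w'W]; rewrite -leqNgt => pw'.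
have pw'' : (p < w')%N.
  by rewrite ltn_neqAle pw' andbT; apply: contraNneq pW => /val_inj ->.
by have := Hc w' (subsetP WS _ w'W); rewrite pw'' (tW w' w'W).
Qed.

Lemma consec_is_next S W p j : consec S p j -> is_interval S W -> p \in W -> j \notin W ->
  is_next S W j.
Proof.
case=> pS jS pj Hc /intervalP WI pW jW; split => //.
- move=> w wW; rewrite ltnNge; apply/negP => jw.
  by have := WI j p w jS pW wW (ltnW pj) jw; rewrite (negbTE jW).
- by move=> x xS Hx; have := Hc x xS; rewrite (Hx p pW) /= -leqNgt.
Qed.

Lemma consec_block_max S W p j : consec S p j -> W \subset S -> is_interval S W ->
  p \in W -> j \notin W -> forall w, w \in W -> (w <= p)%N.
Proof.
case=> pS jS pj Hc WS /intervalP WI pW jW w wW; rewrite leqNgt; apply/negP => pw.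
have := Hc w (subsetP WS _ wW); rewrite pw /= -leqNgt => jw.
by have := WI j p w jS pW wW (ltnW pj) jw; rewrite (negbTE jW).
Qed.

Lemma consec_block_min S W p j : consec S p j -> W \subset S -> is_interval S W ->
  j \in W -> p \notin W -> forall w, w \in W -> (j <= w)%N.
Proof.
case=> pS jS pj Hc WS /intervalP WI jW pW w wW; rewrite leqNgt; apply/negP => wj.
have := Hc w (subsetP WS _ wW); rewrite wj andbT -leqNgt => wp.
by have := WI p w j pS wW jW wp (ltnW pj); rewrite (negbTE pW).
Qed.

Lemma consec_shift S W p j t : consec S p j -> is_interval S W ->
  j \in W -> p \notin W -> is_next S W t -> consec (S :\: W) p t.
Proof.
move=> [pS jS pj Hc] /intervalP WI jW pW [tS tW tmin]; have jt := tW j jW.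
split.
- by rewrite inE pW.
- by rewrite inE tS andbT; apply/negP => /tW; rewrite ltnn.
- exact: ltn_trans pj jt.
- move=> x /setDP[xS xW]; apply/negP => /andP[px xt].
  have jx : (j <= x)%N by have := Hc x xS; rewrite px /= -leqNgt.
  case: (boolP [forall w in W, (w < x)%N]) => [/forall_inP H|].
    by have := tmin x xS H; rewrite leqNgt xt.
  move/forall_inPn => [w wW]; rewrite -leqNgt => xw.
  by have := WI x j w xS jW wW jx xw; rewrite (negbTE xW).
Qed.

Lemma is_next_lift S V W t : is_next V W t -> V \subset S -> is_interval S V ->
  (exists w, w \in W) -> W \subset V -> is_next S W t.
Proof.
move=> [tV tW tmin] VS /intervalP VI [w wW] WV; split.
- exact: (subsetP VS).
- exact: tW.
- move=> x xS Hx; case: (boolP (x \in V)) => xV; first exact: tmin.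
  rewrite leqNgt; apply/negP => xt.
  have := VI x w t xS (subsetP WV _ wW) tV (ltnW (Hx w wW)) (ltnW xt).
  by rewrite (negbTE xV).
Qed.

Lemma setDDS S V W : W \subset V -> (S :\: W) :\: (V :\: W) = S :\: V.
Proof.
move=> WV; apply/setP => x; rewrite !inE.
by case: (boolP (x \in W)) => xW /=; rewrite ?(subsetP WV x xW).
Qed.

Lemma is_next_setDD S V W t j : is_next S V j -> is_next V W t -> W \subset V ->
  is_next (S :\: W) (V :\: W) j.
Proof.
move=> [jS jV jmin] [tV tW tmin] WV; split.
- rewrite inE jS andbT; apply/negP => jW.
  by have := jV j (subsetP WV _ jW); rewrite ltnn.
- by move=> w /setDP[/jV].
- move=> x /setDP[xS xW] Hx.
  case: (boolP [forall v in V, (v < x)%N]) => [/forall_inP H|]; first exact: jmin.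
  move/forall_inPn => [v vV]; rewrite -leqNgt => xv.
  have tVW : t \in V :\: W by rewrite inE tV andbT; apply/negP => /tW; rewrite ltnn.
  have tx := Hx t tVW.
  case: (boolP (v \in W)) => vW.
    by have := leq_ltn_trans xv (tW v vW); rewrite ltnNge (ltnW tx).
  have : v \in V :\: W by rewrite inE vW.
  by move/Hx; rewrite ltnNge xv.
Qed.

Lemma is_prev_setDD S V W t p : is_prev S V p -> is_next V W t -> W \subset V ->
  is_interval S V -> is_prev (S :\: W) (V :\: W) p.
Proof.
move=> [pS pV pmax] [tV tW tmin] WV /intervalP VI; split.
- rewrite inE pS andbT; apply/negP => pW.
  by have := pV p (subsetP WV _ pW); rewrite ltnn.
- by move=> w /setDP[/pV].
- move=> x /setDP[xS xW] Hx.
  case: (boolP [forall v in V, (x < v)%N]) => [/forall_inP H|]; first exact: pmax.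
  move/forall_inPn => [v vV]; rewrite -leqNgt => vx.
  have tVW : t \in V :\: W by rewrite inE tV andbT; apply/negP => /tW; rewrite ltnn.
  have xV := VI x v t xS vV tV vx (ltnW (Hx t tVW)).
  have : x \in V :\: W by rewrite inE xW.
  by move/Hx; rewrite ltnn.
Qed.

Lemma final_setDD S V W t : final S V -> is_next V W t -> W \subset V ->
  final (S :\: W) (V :\: W).
Proof.
move=> fin [tV tW tmin] WV x /setDP[xS xW] Hx; apply: (fin x xS) => v vV.
have tVW : t \in V :\: W by rewrite inE tV andbT; apply/negP => /tW; rewrite ltnn.
case: (boolP (v \in W)) => vW; last by apply: Hx; rewrite inE vW.
exact: ltn_trans (tW v vW) (Hx t tVW).
Qed.

Lemma is_prev_notin_block S W W0 p t0 : W \subset S -> is_interval S W ->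
  is_interval S W0 -> [disjoint W & W0] -> (exists w, w \in W) ->
  is_prev S W p -> is_next S W0 t0 -> t0 \notin W -> p \notin W0.
Proof.
move=> WS /intervalP WI /intervalP W0I dis [w wW] [pS pW pmax] [t0S t0W0 t0min] t0W.
apply/negP => pW0; have pw := pW w wW; have wS := subsetP WS w wW.
have Hw y : y \in W0 -> (y < w)%N.
  move=> yW0; rewrite ltnNge; apply/negP => wy.
  by have := W0I w p y wS pW0 yW0 (ltnW pw) wy; rewrite (disjointFr dis wW).
have t0w := t0min w wS Hw; have pt0 := t0W0 p pW0.
case: (boolP [forall w' in W, (t0 < w')%N]) => [/forall_inP H|].
  by have := pmax t0 t0S H; rewrite leqNgt pt0.
move/forall_inPn => [w' w'W]; rewrite -leqNgt => w't0.
by have := WI t0 w' w t0S w'W wW w't0 t0w; rewrite (negbTE t0W).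
Qed.

Lemma is_prev_shift S W W0 p' t0 : is_prev S W0 p' -> is_next S W0 t0 -> t0 \in W ->
  (forall w, w \in W -> (t0 <= w)%N) -> is_interval S W0 -> (exists w0, w0 \in W0) ->
  is_prev (S :\: W0) W p'.
Proof.
move=> [pS pW0 pmax] [t0S t0W0 t0min] t0W t0m /intervalP W0I [w0 w0W0]; split.
- by rewrite inE pS andbT; apply/negP => /pW0; rewrite ltnn.
- by move=> w wW; apply: ltn_trans (pW0 w0 w0W0) (leq_trans (t0W0 w0 w0W0) (t0m w wW)).
- move=> x /setDP[xS xW0] Hx; apply: pmax => // y yW0.
  rewrite ltnNge; apply/negP => yx; have xt0 := Hx t0 t0W.
  case: (boolP [forall y' in W0, (y' < x)%N]) => [/forall_inP H|].
    by have := t0min x xS H; rewrite leqNgt xt0.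
  move/forall_inPn => [y' y'W0]; rewrite -leqNgt => xy'.
  by have := W0I x y y' xS yW0 y'W0 yx xy'; rewrite (negbTE xW0).
Qed.

Lemma is_prev_block_max S W W0 p t0 : is_prev S W p -> is_next S W0 t0 -> t0 \in W ->
  (forall w, w \in W -> (t0 <= w)%N) -> (exists w0, w0 \in W0) -> W0 \subset S ->
  p \in W0 /\ forall w, w \in W0 -> (w <= p)%N.
Proof.
move=> [pS pW pmax] [t0S t0W0 t0min] t0W t0m [w0 w0W0] W0S.
have H w : w \in W0 -> (w <= p)%N.
  move=> wW0; apply: pmax; first exact: (subsetP W0S).
  by move=> w' w'W; apply: leq_trans (t0W0 w wW0) (t0m w' w'W).
split => //; apply/negPn/negP => pW0.
have : (t0 <= p)%N.
  apply: t0min => // w wW0; rewrite ltn_neqAle H // andbT.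
  by apply: contraNneq pW0 => /val_inj <-.
by rewrite leqNgt (pW t0 t0W).
Qed.

Lemma final_shift S W W0 t0 : final S W -> is_next S W0 t0 -> t0 \in W ->
  is_interval S W -> final (S :\: W) W0.
Proof.
move=> fin [t0S t0W0 t0min] t0W /intervalP WI x /setDP[xS xW] Hx.
have t0x := t0min x xS Hx; apply: (fin x xS) => w wW; rewrite ltnNge.
by apply/negP => xw; have := WI x t0 w xS t0W wW t0x xw; rewrite (negbTE xW).
Qed.

Lemma final_cover2 S W W0 t0 : final S W -> is_next S W0 t0 -> t0 \in W ->
  is_interval S W -> is_interval S W0 ->
  (forall x, x \in S -> ~ (forall w0, w0 \in W0 -> (x < w0)%N)) ->
  forall x, x \in S -> (x \in W0) || (x \in W).
Proof.
move=> fin [t0S t0W0 t0min] t0W /intervalP WI /intervalP W0I nop x xS.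
case: (boolP (x \in W0)) => //= xW0; apply/negPn/negP => xW.
have [w0 w0W0 w0x] : exists2 w0, w0 \in W0 & (w0 <= x)%N.
  case: (boolP [forall w0 in W0, (x < w0)%N]) => [/forall_inP H|]; first by case: (nop x xS).
  by move/forall_inPn => [w0 w0W0]; rewrite -leqNgt; exists w0.
have [w wW xw] : exists2 w, w \in W & (x <= w)%N.
  case: (boolP [forall w in W, (w < x)%N]) => [/forall_inP H|]; first by case: (fin x xS).
  by move/forall_inPn => [w wW]; rewrite -leqNgt; exists w.
have t0x : (t0 <= x)%N.
  apply: t0min => // y yW0; rewrite ltnNge; apply/negP => xy.
  by have := W0I x w0 y xS w0W0 yW0 w0x xy; rewrite (negbTE xW0).
by have := WI x t0 w xS t0W wW t0x xw; rewrite (negbTE xW).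
Qed.

Lemma noncrossing_nested S P X Y (x y z : 'I_n) : partition P S -> noncrossing P ->
  X \in P -> Y \in P -> X != Y -> y \in X -> z \in X -> x \in Y ->
  (y < x)%N -> (x < z)%N -> forall u, u \in Y -> (y < u < z)%N.
Proof.
move=> partP /noncrossingP nc XP YP XY yX zX xY yx xz u uY.
have uX : u \notin X by rewrite (disjointFr (partition_disjoint partP YP XP _) uY) // eq_sym.
case: (ltngtP u y) => [uy|yu|/val_inj uy]; last by rewrite uy yX in uX.
  by have := nc Y X u y x z YP XP uY xY yX zX uy yx xz => /eqP; rewrite eq_sym (negbTE XY).
case: (ltngtP u z) => [//|zu|/val_inj uz].
  by have := nc X Y y x z u XP YP yX zX xY uY yx xz zu => /eqP; rewrite (negbTE XY).
by rewrite uz zX in uX.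
Qed.

Definition hull S X := [set x in S | [exists y in X, exists z in X, (y <= x <= z)%N]].

Lemma hull_proper S X Y (x y z : 'I_n) : y \in S -> y \in X -> z \in X -> x \in Y ->
  (forall u, u \in Y -> (y < u < z)%N) -> hull S Y \proper hull S X.
Proof.
move=> yS yX zX xY inY; apply/properP; split.
  apply/subsetP => v /setIdP[vS /exists_inP[y' y'Y /exists_inP[z' z'Y /andP[y'v vz']]]].
  rewrite inE vS; apply/exists_inP; exists y => //; apply/exists_inP; exists z => //.
  have /andP[yy' _] := inY y' y'Y; have /andP[_ z'z] := inY z' z'Y.
  by rewrite (ltnW (leq_trans yy' y'v)) (ltnW (leq_ltn_trans vz' z'z)).
exists y.
  rewrite inE yS; apply/exists_inP; exists y => //; apply/exists_inP; exists z => //.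
  by have /andP[yx xz] := inY x xY; rewrite leqnn (ltnW (ltn_trans yx xz)).
rewrite inE yS /=; apply/exists_inP => -[y' y'Y /exists_inP[z' _ /andP[y'y _]]].
by have /andP[yy' _] := inY y' y'Y; have := leq_ltn_trans y'y yy'; rewrite ltnn.
Qed.

(* Among the blocks avoiding the largest element, one with the smallest [hull] is an
   interval: a block nested in a gap of its hull would have a smaller hull. *)
Lemma exists_interval_block S P : partition P S -> noncrossing P -> (1 < #|P|)%N ->
  exists2 W, W \in P & is_interval S W /\ exists t, is_next S W t.
Proof.
move=> partP nc cP.
have [m mS mmax] : exists2 m, m \in S & forall y, y \in S -> (y <= m)%N.
  have /set0Pn[X1 X1P] : P != set0 by rewrite -card_gt0 ltnW.
  have [x1 x1X] := partition_block_neq0 partP X1P.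
  have := subsetP (partitionS partP X1P) x1 x1X.
  by case/(arg_maxnP (fun y : 'I_n => nat_of_ord y)) => m; exists m.
have [Pm PmP mPm] := partition_cover partP mS.
have [X2 X2P mX2] : exists2 X, X \in P & m \notin X.
  have /set0Pn[X /setD1P[XPm XP]] : P :\ Pm != set0.
    by rewrite -card_gt0; move: cP; rewrite (cardsD1 Pm) PmP.
  exists X => //; apply: contra XPm => mX.
  by rewrite (partition_block_eq partP XP PmP mX mPm).
pose Q := [pred X | (X \in P) && (m \notin X)].
have QX2 : Q X2 by rewrite /Q /= X2P.
case: (arg_minnP (fun X => #|hull S X|) QX2) => X0 /andP[X0P mX0] X0min.
have X0S := partitionS partP X0P.
have ltm w : w \in X0 -> (w < m)%N.
  move=> wX0; rewrite ltn_neqAle mmax ?(subsetP X0S) // andbT.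
  by apply: contraNneq mX0 => /val_inj <-.
exists X0 => //; split; last exact: (exists_next mS).
apply/intervalP => x y z xS yX zX yx xz; apply/negPn/negP => xX.
have [Y YP xY] := partition_cover partP xS.
have X0Y : X0 != Y by apply: contraNneq xX => ->.
have neq v : v \in X0 -> (v : nat) != x by move=> vX; apply: contraNneq xX => /val_inj <-.
have yx' : (y < x)%N by rewrite ltn_neqAle yx neq.
have xz' : (x < z)%N by rewrite ltn_neqAle xz eq_sym neq.
have inY := noncrossing_nested partP nc X0P YP X0Y yX zX xY yx' xz'.
have mY : m \notin Y.
  by apply/negP => /inY /andP[_ mz]; have := ltn_trans mz (ltm z zX); rewrite ltnn.
have := X0min Y; rewrite /Q /= YP mY => /(_ isT); rewrite leqNgt => /negP; apply.
exact: proper_card (hull_proper (subsetP X0S y yX) yX zX xY inY).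
Qed.

Section Range.
Variables l s : nat.
Let V := [set i : 'I_n | (l <= i < l + s)%N].

Lemma interval_range : is_interval [set: 'I_n] V.
Proof.
apply/intervalP => x y z _; rewrite !inE => /andP[ly _] /andP[_ zls] yx xz.
by rewrite (leq_trans ly yx) (leq_ltn_trans xz zls).
Qed.

Lemma is_next_range (v j : 'I_n) : v \in V -> nat_of_ord j = (l + s)%N ->
  is_next [set: 'I_n] V j.
Proof.
rewrite inE => /andP[lv vls] hj; split => [||x _ Hx]; rewrite ?in_setT //.
  by move=> w; rewrite inE hj => /andP[].
have vx := Hx v; rewrite inE lv vls in vx; have {}vx := vx isT.
rewrite leqNgt hj; apply/negP => xls.
by have := Hx x; rewrite inE xls (leq_trans lv (ltnW vx)) ltnn => /(_ isT).
Qed.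

Lemma is_prev_range (v p : 'I_n) : v \in V -> (nat_of_ord p).+1 = l ->
  is_prev [set: 'I_n] V p.
Proof.
rewrite inE => /andP[lv vls] hp.
have ln : (l < n)%N by apply: leq_ltn_trans lv (ltn_ord v).
split => [||x _ Hx]; rewrite ?in_setT //; first by move=> w; rewrite inE -hp => /andP[].
by have := Hx (Ordinal ln); rewrite inE /= leqnn (leq_ltn_trans lv vls) -hp ltnS => /(_ isT).
Qed.

End Range.

End Partitions.

(** * Ordered products *)

Definition upd (I : eqType) (T : Type) (f : I -> T) (j : I) (x : T) : I -> T :=
  fun i => if i == j then x else f i.

Section OrderedProducts.
Local Open Scope ring_scope.
Variables (A : pzRingType) (n : nat).
Implicit Types (s : seq 'I_n) (a : 'I_n -> A).

Let ord_lt : rel 'I_n := fun i j => (i < j)%N.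
Let ord_lt_trans : transitive ord_lt. Proof. by move=> y x z; apply: ltn_trans. Qed.

Lemma sorted_enum_set (W : {set 'I_n}) : sorted ord_lt (enum W).
Proof.
rewrite /enum_mem -enumT; apply: sorted_filter; first exact: ord_lt_trans.
by have := iota_ltn_sorted 0 n; rewrite -val_enum_ord sorted_map.
Qed.

Lemma prod_upd_notin s a j x : j \notin s ->
  \prod_(i <- s) upd a j x i = \prod_(i <- s) a i.
Proof.
move=> js; apply: eq_big_seq => i iS; rewrite /upd; case: eqP => // ij.
by rewrite -ij iS in js.
Qed.

Lemma prod_upd_min s a t y : sorted ord_lt s -> t \in s ->
  (forall w, w \in s -> (t <= w)%N) ->
  \prod_(i <- s) upd a t (y * a t) i = y * \prod_(i <- s) a i.
Proof.
case: s => [//|x s] /= Hs; have Hall := order_path_min ord_lt_trans Hs.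
rewrite in_cons => ts Hmin; rewrite !big_cons.
case: (x =P t) => [xt|xt].
  subst x; rewrite /upd eqxx prod_upd_notin ?mulrA //.
  by apply/negP => /(allP Hall); rewrite /ord_lt ltnn.
move: ts; rewrite (introF eqP (nesym xt)) /= => ts.
have := Hmin x; rewrite mem_head => /(_ isT); have := allP Hall t ts.
by rewrite /ord_lt => /leq_trans H /H; rewrite ltnn.
Qed.

Lemma prod_upd_max s a p y : sorted ord_lt s -> p \in s ->
  (forall w, w \in s -> (w <= p)%N) ->
  \prod_(i <- s) upd a p (a p * y) i = \prod_(i <- s) a i * y.
Proof.
elim: s => [//|x s IH] /= Hs; have Hall := order_path_min ord_lt_trans Hs.
rewrite in_cons => ps Hmax; rewrite !big_cons.
case: (x =P p) => [xp|xp].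
  subst x; case: s {IH} Hs Hall ps Hmax => [|z s] Hs Hall ps Hmax.
    by rewrite !big_nil /upd eqxx !mulr1.
  have := Hmax z; rewrite !in_cons eqxx orbT => /(_ isT).
  by move: Hall => /andP[+ _]; rewrite /ord_lt => /leq_trans H /H; rewrite ltnn.
move: ps; rewrite (introF eqP (nesym xp)) /= => ps.
rewrite {1}/upd (introF eqP xp) IH ?mulrA //; first exact: path_sorted Hs.
by move=> w ws; apply: Hmax; rewrite in_cons ws orbT.
Qed.

Lemma prod_upd_consec s a p j y : sorted ord_lt s -> p \in s -> j \in s -> (p < j)%N ->
  (forall x, x \in s -> ~~ ((p < x)%N && (x < j)%N)) ->
  \prod_(i <- s) upd a p (a p * y) i = \prod_(i <- s) upd a j (y * a j) i.
Proof.
elim: s => [//|x s IH] /= Hs; have Hall := order_path_min ord_lt_trans Hs.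
rewrite !in_cons => ps js pj Hc; rewrite !big_cons.
have pnj : p != j by rewrite neq_ltn pj.
case: (x =P p) => [xp|xp].
  subst x; case: s IH Hs Hall ps js Hc => [|z s] IH Hs Hall ps js Hc.
    by move: js; rewrite in_nil orbF eq_sym (negbTE pnj).
  move: js; rewrite eq_sym (negbTE pnj) /= => js.
  have Hs' := path_sorted Hs.
  have zj : z = j.
    move: Hall => /= /andP[pz _]; rewrite /ord_lt in pz; apply/val_inj/eqP.
    rewrite eqn_leq.
    have := Hc z; rewrite !in_cons eqxx orbT pz => /(_ isT) /=.
    rewrite -leqNgt => ->; rewrite andbT.
    move: js; rewrite in_cons => /orP[/eqP-> //|js].
    have := allP (order_path_min ord_lt_trans Hs') j js.
    by rewrite /ord_lt => /ltnW ->.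
  subst z; rewrite !big_cons /upd eqxx (negbTE pnj) eq_sym (negbTE pnj) eqxx.
  have Hj : j \notin s.
    apply/negP => js'; have := allP (order_path_min ord_lt_trans Hs') j js'.
    by rewrite /ord_lt ltnn.
  have Hp : p \notin s.
    apply/negP => ps'; have := allP (order_path_min ord_lt_trans Hs) p.
    by rewrite in_cons ps' orbT => /(_ isT); rewrite /ord_lt ltnn.
  by rewrite -/(upd a p (a p * y)) -/(upd a j (y * a j)) !prod_upd_notin // !mulrA.
move: ps; rewrite (introF eqP (nesym xp)) /= => ps.
have xj : x != j.
  apply/eqP => xj; subst x; have := allP Hall p ps.
  by rewrite /ord_lt => /(ltn_trans pj); rewrite ltnn.
rewrite /upd (introF eqP xp) (negbTE xj) -/(upd a p (a p * y)) -/(upd a j (y * a j)).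
rewrite IH //; first exact: path_sorted Hs.
  by move: js; rewrite eq_sym (negbTE xj).
by move=> z zs; apply: Hc; rewrite in_cons zs orbT.
Qed.

Lemma prod_updD s a j x y : uniq s -> j \in s ->
  \prod_(i <- s) upd a j (x + y) i
  = \prod_(i <- s) upd a j x i + \prod_(i <- s) upd a j y i.
Proof.
elim: s => [//|z s IH] /= /andP[zs us]; rewrite in_cons !big_cons.
case: (z =P j) => [zj _|zj js].
  by subst z; rewrite /upd eqxx -!/(upd a j _) !prod_upd_notin // mulrDl.
rewrite /upd (introF eqP zj) -!/(upd a j _) IH ?mulrDr //.
by move: js; rewrite eq_sym (introF eqP zj).
Qed.

End OrderedProducts.

(** * The recursion [Phi] *)

Section PhiTheory.
Local Open Scope ring_scope.
Variables (R : realType) (Bt A : algType R[i]).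
Variable iota : {rmorphism Bt -> A}.
Variable E : {additive A -> Bt}.
Hypothesis E_bimod : forall (b1 b2 : Bt) (x : A), E (iota b1 * x * iota b2) = b1 * E x * b2.
Variable n : nat.
Implicit Types (S W V X Y : {set 'I_n}) (P Q : {set {set 'I_n}}) (a b : 'I_n -> A).

Local Notation Phi := (Phi iota E).

Definition oprod W a := \prod_(i <- enum W) a i.

Definition fold_block a W (j : 'I_n) :=
  fun i => if i == j then iota (E (oprod W a)) * a i else a i.

Definition pick_block S P := [pick W in P | is_interval S W && (next_after S W != None)].

Lemma E_iotaMl c x : E (iota c * x) = c * E x.
Proof. by have := E_bimod c 1 x; rewrite rmorph1 !mulr1. Qed.

Lemma E_iotaMr c x : E (x * iota c) = E x * c.
Proof. by have := E_bimod 1 c x; rewrite rmorph1 !mul1r. Qed.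

Lemma pick_block_some S P W : pick_block S P = Some W ->
  [/\ W \in P, is_interval S W & exists j, next_after S W = Some j].
Proof.
rewrite /pick_block; case: pickP => // W' /andP[WP /andP[WI Wn]] [<-]; split => //.
by case: (next_after S W') Wn => // j _; exists j.
Qed.

Lemma pick_block_none S P W : pick_block S P = None -> W \in P -> is_interval S W ->
  next_after S W = None.
Proof.
rewrite /pick_block; case: pickP => // H _ WP WI; have := H W; rewrite WP WI /=.
by case: (next_after S W).
Qed.

Lemma Phi_no_block S P a : pick_block S P = None -> Phi S P a = E (oprod S a).
Proof. by rewrite /Phi /pick_block; case: #|P| => [|k] //= ->. Qed.

Lemma Phi_pick_block S P a W j : pick_block S P = Some W -> next_after S W = Some j ->
  Phi S P a = Phi (S :\: W) (P :\ W) (fold_block a W j).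
Proof.
move=> Hp Hn; have [WP _ _] := pick_block_some Hp.
by move: Hp; rewrite {1}/Phi (cardsD1 W P) WP add1n /= /pick_block => ->; rewrite Hn.
Qed.

Lemma eq_oprod W a b : {in W, a =1 b} -> oprod W a = oprod W b.
Proof. by move=> H; apply: eq_big_seq => i; rewrite mem_enum; apply: H. Qed.

Lemma eq_Phi S P a b : partition P S -> {in S, a =1 b} -> Phi S P a = Phi S P b.
Proof.
have [k Hk] := ubnP #|P|; elim: k S P a b Hk => // k IH S P a b Hk partP Hab.
case Hp: (pick_block S P) => [W|]; last by rewrite !Phi_no_block // (eq_oprod Hab).
have [WP WI [j Hj]] := pick_block_some Hp.
rewrite !(Phi_pick_block _ Hp Hj); apply: IH; first exact: card_setD1_lt Hk WP.
  exact: partitionD1.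
move=> i /setDP[iS iW]; rewrite /fold_block Hab // (@eq_oprod W a b) // => x xW.
exact/Hab/(subsetP (partitionS partP WP)).
Qed.

Lemma oprod_upd_notin W a j x : j \notin W -> oprod W (upd a j x) = oprod W a.
Proof. by move=> jW; rewrite /oprod prod_upd_notin // mem_enum. Qed.

Lemma oprod_fold_notin W W' a j : j \notin W -> oprod W (fold_block a W' j) = oprod W a.
Proof.
move=> jW; apply: eq_oprod => i iW; rewrite /fold_block.
by case: eqP => // e; rewrite -e iW in jW.
Qed.

Lemma oprod_upd_min W a t y : t \in W -> (forall w, w \in W -> (t <= w)%N) ->
  oprod W (upd a t (y * a t)) = y * oprod W a.
Proof.
move=> tW tmin; rewrite /oprod prod_upd_min ?mem_enum //; first exact: sorted_enum_set.
by move=> w; rewrite mem_enum; apply: tmin.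
Qed.

Lemma oprod_upd_max W a p y : p \in W -> (forall w, w \in W -> (w <= p)%N) ->
  oprod W (upd a p (a p * y)) = oprod W a * y.
Proof.
move=> pW pmax; rewrite /oprod prod_upd_max ?mem_enum //; first exact: sorted_enum_set.
by move=> w; rewrite mem_enum; apply: pmax.
Qed.

Lemma oprod_upd_consec W a p j y : consec W p j ->
  oprod W (upd a p (a p * y)) = oprod W (upd a j (y * a j)).
Proof.
case=> pW jW pj Hc; rewrite /oprod (@prod_upd_consec _ _ _ a p j) ?mem_enum //.
  exact: sorted_enum_set.
by move=> x; rewrite mem_enum; apply: Hc.
Qed.

Lemma oprod_fold_min W W' a t : t \in W -> (forall w, w \in W -> (t <= w)%N) ->
  oprod W (fold_block a W' t) = iota (E (oprod W' a)) * oprod W a.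
Proof.
move=> tW tmin; rewrite -(oprod_upd_min a _ tW tmin); apply: eq_oprod => i _.
by rewrite /fold_block /upd; case: eqP => // ->.
Qed.

Section FoldDiamond.
Variable k : nat.
Hypothesis IH : forall S P a W t, (#|P| < k)%N -> partition P S -> W \in P ->
  is_interval S W -> is_next S W t ->
  Phi S P a = Phi (S :\: W) (P :\ W) (fold_block a W t).

Lemma Phi_fold_diamond S P a W1 W2 t1 t2 : (#|P| < k.+1)%N -> partition P S ->
  W1 \in P -> W2 \in P -> W1 != W2 -> is_interval S W1 -> is_interval S W2 ->
  is_next S W1 t1 -> is_next S W2 t2 -> t2 \notin W1 ->
  Phi (S :\: W2) (P :\ W2) (fold_block a W2 t2)
  = Phi (S :\: W1) (P :\ W1) (fold_block a W1 t1).
Proof.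
move=> Hk partP W1P W2P n12 W1I W2I W1t W2t t2W1.
have dis := partition_disjoint partP W1P W2P n12.
have W1S := partitionS partP W1P; have W2S := partitionS partP W2P.
have part1 := partitionD1 partP W1P; have part2 := partitionD1 partP W2P.
have W2P1 : W2 \in P :\ W1 by rewrite !inE W2P andbT eq_sym.
have W1P2 : W1 \in P :\ W2 by rewrite !inE W1P andbT.
have W1I2 := intervalS (subsetDl S W2) W1I; have W2I1 := intervalS (subsetDl S W1) W2I.
have Hk1 := card_setD1_lt Hk W1P; have Hk2 := card_setD1_lt Hk W2P.
rewrite [RHS](IH _ Hk1 part1 W2P1 W2I1 (is_next_setD W2t t2W1)).
have [t1W2|t1W2] := boolP (t1 \in W2).
  rewrite (IH _ Hk2 part2 W1P2 W1I2 (is_next_shift W1t t1W2 W2t W2I)).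
  rewrite setDDC [X in Phi _ X](setDDC P); apply: eq_Phi; first exact: partitionD1 part1 W2P1.
  move=> i /setDP[/setDP[iS iW1] iW2].
  have i1 : i != t1 by apply: contraNneq iW2 => ->.
  rewrite /fold_block (negbTE i1) /=; case: eqP => // it2.
  rewrite oprod_fold_notin // (oprod_fold_min W1 a t1W2).
    by rewrite E_iotaMl rmorphM mulrA.
  exact: (is_next_block_min W1t W1S W2S W2I t1W2 dis).
rewrite (IH _ Hk2 part2 W1P2 W1I2 (is_next_setD W1t t1W2)).
rewrite setDDC [X in Phi _ X](setDDC P); apply: eq_Phi; first exact: partitionD1 part1 W2P1.
move=> i /setDP[/setDP[iS iW1] iW2].
have nt : t1 != t2.
  apply: (is_next_neq W1S W2S W1I W2I dis _ _ W1t W2t).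
    exact: partition_block_neq0 partP W1P.
  exact: partition_block_neq0 partP W2P.
rewrite /fold_block !oprod_fold_notin //.
by case: (i =P t1) => [e1|_]; case: (i =P t2) => // e2; move: nt; rewrite -e1 -e2 eqxx.
Qed.

End FoldDiamond.

Lemma Phi_fold S P a W t : partition P S -> W \in P -> is_interval S W ->
  is_next S W t -> Phi S P a = Phi (S :\: W) (P :\ W) (fold_block a W t).
Proof.
have [k Hk] := ubnP #|P|; elim: k S P a W t Hk => // k IH S P a W t Hk partP WP WI Wt.
case Hp: (pick_block S P) => [W0|]; last first.
  by have := pick_block_none Hp WP WI; rewrite ((next_afterP _ _ _).2 Wt).
have [W0P W0I [t0 Ht0]] := pick_block_some Hp; rewrite (Phi_pick_block _ Hp Ht0).
have W0t0 := (next_afterP _ _ _).1 Ht0.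
have [e|neq] := eqVneq W0 W; first by subst W0; rewrite (is_next_uniq W0t0 Wt).
have [t0W|t0W] := boolP (t0 \in W); last first.
  by apply: (Phi_fold_diamond IH) => //; rewrite eq_sym.
symmetry; apply: (Phi_fold_diamond IH) => //.
apply/negP => tW0; have [_ H1 _] := W0t0; have [_ H2 _] := Wt.
by have := ltn_trans (H1 t tW0) (H2 t0 t0W); rewrite ltnn.
Qed.

Local Ltac case_upd := rewrite /upd /fold_block;
  repeat (match goal with |- context [?x == ?y] =>
            let e := fresh "e" in case: (x =P y) => e end);
  try subst; try (by exfalso; congruence);
  rewrite ?E_iotaMl ?E_iotaMr ?rmorphM ?mulrA //.

Lemma Phi_upd_consec S P a p j c : partition P S -> consec S p j ->
  Phi S P (upd a p (a p * iota c)) = Phi S P (upd a j (iota c * a j)).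
Proof.
have [k Hk] := ubnP #|P|; elim: k S P a p j Hk => // k IH S P a p j Hk partP C.
have [pS jS pj _] := C.
case Hp: (pick_block S P) => [W|]; last by rewrite !Phi_no_block // (oprod_upd_consec _ _ C).
have [WP WI [t Ht]] := pick_block_some Hp; rewrite !(Phi_pick_block _ Hp Ht).
have Wt := (next_afterP _ _ _).1 Ht; have WS := partitionS partP WP.
have partW := partitionD1 partP WP; have HkW := card_setD1_lt Hk WP.
have [pW|pW] := boolP (p \in W); have [jW|jW] := boolP (j \in W).
- apply: eq_Phi => // i /setDP[iS iW].
  have ip : i <> p by move=> e; rewrite e pW in iW.
  have ij : i <> j by move=> e; rewrite e jW in iW.
  by rewrite /fold_block (oprod_upd_consec _ _ (consecS C WS pW jW)); case_upd.
- have tj : t = j := is_next_uniq Wt (consec_is_next C WI pW jW); subst t.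
  apply: eq_Phi => // i /setDP[iS iW].
  have ip : i <> p by move=> e; rewrite e pW in iW.
  rewrite /fold_block (oprod_upd_notin _ _ jW) oprod_upd_max //; first by case_upd.
  exact: consec_block_max C WS WI pW jW.
- have jmin := consec_block_min C WS WI jW pW.
  have C' := consec_shift C WI jW pW Wt.
  have tp : t <> p by move=> e; move: C' => [_ _ + _]; rewrite e ltnn.
  have tj : t <> j by move=> e; have [_ H _] := Wt; have := H j jW; rewrite e ltnn.
  transitivity (Phi (S :\: W) (P :\ W) (upd (fold_block a W t) p (fold_block a W t p * iota c))).
    apply: eq_Phi => // i /setDP[iS iW].
    have ij : i <> j by move=> e; rewrite e jW in iW.
    by rewrite /fold_block oprod_upd_notin //; case_upd.
  rewrite (IH _ _ _ _ _ HkW partW C'); apply: eq_Phi => // i /setDP[iS iW].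
  have ij : i <> j by move=> e; rewrite e jW in iW.
  by rewrite /fold_block oprod_upd_min //; case_upd.
- have tj : t <> j by move/eqP: (consec_next_neq C WS (partition_block_neq0 partP WP) Wt pW).
  have C' : consec (S :\: W) p j by apply: consecS C (subsetDl S W) _ _; rewrite inE ?pW ?jW.
  transitivity (Phi (S :\: W) (P :\ W) (upd (fold_block a W t) p (fold_block a W t p * iota c))).
    by apply: eq_Phi => // i _; rewrite /fold_block oprod_upd_notin //; case_upd.
  rewrite (IH _ _ _ _ _ HkW partW C').
  by apply: eq_Phi => // i _; rewrite /fold_block oprod_upd_notin //; case_upd.
Qed.

Lemma Phi_set1 S a : Phi S [set S] a = E (oprod S a).
Proof.
apply: Phi_no_block; rewrite /pick_block; case: pickP => // W.
rewrite inE => /andP[/eqP -> /andP[_]].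
case e: (next_after S S) => [j|//] _.
by have [jS jW _] := (next_afterP _ _ _).1 e; have := jW j jS; rewrite ltnn.
Qed.

Lemma block_notin_outer S V P2 W : partition P2 (S :\: V) -> W \subset V ->
  (exists w, w \in W) -> W \notin P2.
Proof.
move=> part2 WV [w wW]; apply/negP => WP2.
by have := subsetP (partitionS part2 WP2) w wW; rewrite inE (subsetP WV w wW).
Qed.

Lemma Phi_setU_next S V P1 P2 a j : partition P1 V -> noncrossing P1 ->
  partition P2 (S :\: V) -> V \subset S -> (exists v, v \in V) ->
  is_interval S V -> is_next S V j ->
  Phi S (P1 :|: P2) a = Phi (S :\: V) P2 (upd a j (iota (Phi V P1 a) * a j)).
Proof.
have [k Hk] := ubnP #|P1|.
elim: k S V P1 a Hk => // k IH S V P1 a Hk part1 nc1 part2 VS Vne VI Vj.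
have partU := partitionU part1 part2 VS.
have jV := is_next_notin Vj.
have [cP1|cP1] := leqP #|P1| 1.
  have P1V := partition_card_le1 part1 cP1 Vne; rewrite P1V in partU *.
  have VP : V \in [set V] :|: P2 by rewrite !inE eqxx.
  rewrite Phi_set1 (Phi_fold _ partU VP VI Vj) setD1Ul; last exact: block_notin_outer part2 _ Vne.
  rewrite setDv set0U; apply: eq_Phi => // i _.
  by rewrite /fold_block /upd; case: eqP => // ->.
have [W WP1 [WI [t Wt]]] := exists_interval_block part1 nc1 cP1.
have WV := partitionS part1 WP1; have Wne := partition_block_neq0 part1 WP1.
have WSt := is_next_lift Wt VS VI Wne WV.
have WP : W \in P1 :|: P2 by rewrite inE WP1.
have [tV tW _] := Wt; have tnW := is_next_notin Wt.
have jt : j != t by apply: contraNneq jV => ->.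
rewrite (Phi_fold _ partU WP (interval_trans VI WV WI) WSt) setD1Ul; last first.
  exact: block_notin_outer part2 WV Wne.
rewrite (Phi_fold a part1 WP1 WI Wt) (IH (S :\: W) (V :\: W) (P1 :\ W)).
- rewrite setDDS //; apply: eq_Phi => // i /setDP[iS iV].
  have it : i != t by apply: contraNneq iV => ->.
  rewrite /upd; case: eqP => [e|_]; rewrite /fold_block ?(negbTE it) //.
  by rewrite (negbTE jt) ?e.
- exact: card_setD1_lt Hk WP1.
- exact: partitionD1.
- by apply: noncrossingS nc1; apply: subD1set.
- by rewrite setDDS.
- exact: setSD.
- by exists t; rewrite inE tnW.
- exact: interval_setD.
- exact: is_next_setDD Vj Wt WV.
Qed.

Lemma Phi_updD S P a j x y : partition P S -> j \in S ->
  Phi S P (upd a j (x + y)) = Phi S P (upd a j x) + Phi S P (upd a j y).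
Proof.
have [k Hk] := ubnP #|P|; elim: k S P a j x y Hk => // k IH S P a j x y Hk partP jS.
case Hp: (pick_block S P) => [W|]; last first.
  by rewrite !Phi_no_block // /oprod prod_updD ?enum_uniq ?mem_enum // raddfD.
have [WP WI [t Ht]] := pick_block_some Hp; rewrite !(Phi_pick_block _ Hp Ht).
have Wt := (next_afterP _ _ _).1 Ht; have [tS tW _] := Wt; have tnW := is_next_notin Wt.
have partW := partitionD1 partP WP; have HkW := card_setD1_lt Hk WP.
have [jW|jW] := boolP (j \in W).
  have jt : j != t by apply: contraNneq tnW => <-.
  pose f v := iota (E (oprod W (upd a j v))) * a t.
  have eq v : Phi (S :\: W) (P :\ W) (fold_block (upd a j v) W t)
              = Phi (S :\: W) (P :\ W) (upd a t (f v)).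
    apply: eq_Phi => // i /setDP[iS iW].
    have ij : i != j by apply: contraNneq iW => ->.
    by rewrite /fold_block /upd (negbTE ij); case: eqP => // ->.
  rewrite !eq -IH //; last by rewrite inE tnW.
  congr Phi; congr upd; rewrite /f /oprod prod_updD ?enum_uniq ?mem_enum //.
  by rewrite !raddfD /= mulrDl.
have oprod_upd v : oprod W (upd a j v) = oprod W a by rewrite oprod_upd_notin.
have jS' : j \in S :\: W by rewrite inE jW.
have [jt|jt] := eqVneq j t.
  subst t.
  have eq v : Phi (S :\: W) (P :\ W) (fold_block (upd a j v) W j)
              = Phi (S :\: W) (P :\ W) (upd (fold_block a W j) j (iota (E (oprod W a)) * v)).
    by apply: eq_Phi => // i _; rewrite /fold_block oprod_upd /upd; case: eqP.
  by rewrite !eq -IH // mulrDr.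
have eq v : Phi (S :\: W) (P :\ W) (fold_block (upd a j v) W t)
            = Phi (S :\: W) (P :\ W) (upd (fold_block a W t) j v).
  apply: eq_Phi => // i _; rewrite /fold_block oprod_upd /upd.
  have tj : (t == j) = false by rewrite eq_sym (negbTE jt).
  by case: (i =P t) => [->|_]; rewrite ?eqxx ?tj //; case: (i =P j).
by rewrite !eq -IH.
Qed.

Lemma partition_two_blocks S P W W0 : partition P S -> W \in P -> W0 \in P -> W != W0 ->
  (forall x, x \in S -> (x \in W0) || (x \in W)) -> S :\: W0 = W /\ P :\ W0 = [set W].
Proof.
move=> partP WP W0P nW cov; have dis := partition_disjoint partP WP W0P nW.
have WS := partitionS partP WP.
split.
  apply/setP => x; rewrite inE; have [xW|xW] := boolP (x \in W).
    by rewrite (disjointFr dis xW) (subsetP WS x xW).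
  have [xS|] := boolP (x \in S); rewrite ?andbF //.
  by move: (cov x xS); rewrite (negbTE xW) orbF => ->.
apply/setP => X; rewrite !inE; have [->|XW] /= := eqVneq X W; first by rewrite WP nW.
apply/negbTE; rewrite negb_and negbK; have [XP|] := boolP (X \in P); last by rewrite orbT.
have [x xX] := partition_block_neq0 partP XP; have xS := subsetP (partitionS partP XP) x xX.
move: (cov x xS) => /orP[xW0|xW]; first by rewrite (partition_block_eq partP XP W0P xX xW0) eqxx.
by case/eqP: XW; apply: (partition_block_eq partP XP WP xX xW).
Qed.

(* Induction step of [Phi_fold_final], where [W0] is the block that [Phi] contracts
   first, into its successor [t0]: either [t0] lies outside [W] and the two
   contractions commute, or [W0] immediately precedes [W], with or without elements
   of [S] before [W0]. *)
Section FoldFinal.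
Variable k : nat.
Hypothesis IH : forall S P a W p, (#|P| < k)%N -> partition P S -> noncrossing P ->
  W \in P -> is_interval S W -> is_prev S W p -> final S W ->
  Phi S P a = Phi (S :\: W) (P :\ W) (upd a p (a p * iota (E (oprod W a)))).
Variables (S : {set 'I_n}) (P : {set {set 'I_n}}) (a : 'I_n -> A).
Variables (W W0 : {set 'I_n}) (p t0 : 'I_n).
Hypotheses (Hk : (#|P| < k.+1)%N) (partP : partition P S) (ncP : noncrossing P).
Hypotheses (WP : W \in P) (WI : is_interval S W) (Wp : is_prev S W p) (finW : final S W).
Hypotheses (W0P : W0 \in P) (W0I : is_interval S W0) (W0t0 : is_next S W0 t0).

Let WS := partitionS partP WP.
Let W0S := partitionS partP W0P.
Let W0ne := partition_block_neq0 partP W0P.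
Let WW0 : W != W0.
Proof.
apply/eqP => e; have [t0S H _] := W0t0; rewrite -e in H; exact: finW t0 t0S H.
Qed.
Let dis := partition_disjoint partP WP W0P WW0.
Let dis0 : [disjoint W0 & W]. Proof. by rewrite disjoint_sym. Qed.
Let partW := partitionD1 partP WP.
Let part0 := partitionD1 partP W0P.
Let ncW : noncrossing (P :\ W). Proof. exact: noncrossingS (subD1set P W) ncP. Qed.
Let nc0 : noncrossing (P :\ W0). Proof. exact: noncrossingS (subD1set P W0) ncP. Qed.
Let HkW := card_setD1_lt Hk WP.
Let Hk0 := card_setD1_lt Hk W0P.
Let WP0 : W \in P :\ W0. Proof. by rewrite !inE WP andbT. Qed.
Let W0PW : W0 \in P :\ W. Proof. by rewrite !inE W0P andbT eq_sym. Qed.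
Let WI0 := intervalS (subsetDl S W0) WI.
Let W0IW := intervalS (subsetDl S W) W0I.

Lemma Phi_fold_final_far : t0 \notin W ->
  Phi (S :\: W0) (P :\ W0) (fold_block a W0 t0)
  = Phi (S :\: W) (P :\ W) (upd a p (a p * iota (E (oprod W a)))).
Proof.
move=> t0W.
have pW0 := is_prev_notin_block WS WI W0I dis (partition_block_neq0 partP WP) Wp W0t0 t0W.
rewrite (IH _ Hk0 part0 nc0 WP0 WI0 (is_prev_setD Wp pW0) (final_setD (X := W0) finW)).
rewrite (Phi_fold _ partW W0PW W0IW (is_next_setD W0t0 t0W)).
rewrite setDDC [X in Phi _ X](setDDC P); apply: eq_Phi; first exact: partitionD1 partW W0PW.
move=> i /setDP[/setDP[iS iW0] iW].
by rewrite (oprod_fold_notin _ _ t0W) /fold_block (oprod_upd_notin _ _ pW0); case_upd.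
Qed.

Lemma Phi_fold_final_near p' : t0 \in W -> is_prev S W0 p' ->
  Phi (S :\: W0) (P :\ W0) (fold_block a W0 t0)
  = Phi (S :\: W) (P :\ W) (upd a p (a p * iota (E (oprod W a)))).
Proof.
move=> t0W W0p'.
have t0m := is_next_block_min W0t0 W0S WS WI t0W dis0.
have [pW0 pmax] := is_prev_block_max Wp W0t0 t0W t0m W0ne W0S.
have p'W := is_prev_shift W0p' W0t0 t0W t0m W0I W0ne.
have p'nW : p' \notin W by apply: is_prev_notin p'W.
rewrite (IH _ Hk0 part0 nc0 WP0 WI0 p'W (final_setD (X := W0) finW)).
rewrite (IH _ HkW partW ncW W0PW W0IW (is_prev_setD W0p' p'nW)
  (final_shift finW W0t0 t0W WI)).
rewrite setDDC [X in Phi _ X](setDDC P); apply: eq_Phi; first exact: partitionD1 partW W0PW.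
move=> i /setDP[/setDP[iS iW] iW0].
have ip : i <> p by move=> e; rewrite e pW0 in iW0.
have it : i <> t0 by move=> e; rewrite e t0W in iW.
have p'p : p' <> p by move=> e; rewrite -e (negbTE (is_prev_notin W0p')) in pW0.
have p't : p' <> t0 by move=> e; rewrite -e (negbTE p'nW) in t0W.
by rewrite (oprod_fold_min _ _ t0W t0m) oprod_upd_max //; case_upd.
Qed.

Lemma Phi_fold_final_pair : t0 \in W ->
  (forall x, x \in S -> ~ (forall w0, w0 \in W0 -> (x < w0)%N)) ->
  Phi (S :\: W0) (P :\ W0) (fold_block a W0 t0)
  = Phi (S :\: W) (P :\ W) (upd a p (a p * iota (E (oprod W a)))).
Proof.
move=> t0W nop.
have t0m := is_next_block_min W0t0 W0S WS WI t0W dis0.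
have [pW0 pmax] := is_prev_block_max Wp W0t0 t0W t0m W0ne W0S.
have cov := final_cover2 finW W0t0 t0W WI W0I nop.
have [-> ->] := partition_two_blocks partP WP W0P WW0 cov.
have [-> ->] : S :\: W = W0 /\ P :\ W = [set W0].
  by apply: partition_two_blocks; rewrite 1?eq_sym // => x /cov; rewrite orbC.
rewrite !Phi_set1 (oprod_fold_min _ _ t0W t0m) oprod_upd_max //.
by rewrite E_iotaMl E_iotaMr.
Qed.

End FoldFinal.

Lemma Phi_fold_final S P a W p : partition P S -> noncrossing P -> W \in P ->
  is_interval S W -> is_prev S W p -> final S W ->
  Phi S P a = Phi (S :\: W) (P :\ W) (upd a p (a p * iota (E (oprod W a)))).
Proof.
have [k Hk] := ubnP #|P|; elim: k S P a W p Hk => // k IH S P a W p Hk partP nc WP WI Wp fin.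
case Hp: (pick_block S P) => [W0|]; last first.
  have [X XP pX] := partition_cover partP (let: And3 pS _ _ := Wp in pS).
  have cP : (1 < #|P|)%N.
    rewrite (cardsD1 W P) WP add1n ltnS card_gt0; apply/set0Pn; exists X.
    by rewrite !inE XP andbT; apply: contraNneq (is_prev_notin Wp) => <-.
  have [W1 W1P [W1I [t1 W1t]]] := exists_interval_block partP nc cP.
  by have := pick_block_none Hp W1P W1I; rewrite ((next_afterP _ _ _).2 W1t).
have [W0P W0I [t0 Ht0]] := pick_block_some Hp; rewrite (Phi_pick_block _ Hp Ht0).
have W0t0 := (next_afterP _ _ _).1 Ht0.
have [t0W|t0W] := boolP (t0 \in W); last first.
  exact: (Phi_fold_final_far IH _ Hk partP nc WP WI Wp fin W0P W0I W0t0 t0W).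
have [/exists_inP[x xS /forall_inP Hx]|nop] :=
  boolP [exists x in S, [forall w0 in W0, (x < w0)%N]].
  have [p' W0p'] := exists_prev xS Hx.
  exact: (Phi_fold_final_near IH _ Hk partP nc WP WI Wp fin W0P W0I W0t0 t0W W0p').
apply: (Phi_fold_final_pair _ partP WP WI Wp fin W0P W0I W0t0 t0W) => x xS H.
move/negP: nop; apply.
by apply/exists_inP; exists x => //; apply/forall_inP.
Qed.

Lemma Phi_setU_final S V P1 P2 a p : partition P1 V -> noncrossing P1 ->
  partition P2 (S :\: V) -> noncrossing (P1 :|: P2) ->
  V \subset S -> (exists v, v \in V) -> is_interval S V -> is_prev S V p -> final S V ->
  Phi S (P1 :|: P2) a = Phi (S :\: V) P2 (upd a p (a p * iota (Phi V P1 a))).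
Proof.
have [k Hk] := ubnP #|P1|.
elim: k S V P1 a Hk => // k IH S V P1 a Hk part1 nc1 part2 ncU VS Vne VI Vp fin.
have partU := partitionU part1 part2 VS.
have pV := is_prev_notin Vp.
have [cP1|cP1] := leqP #|P1| 1.
  have P1V := partition_card_le1 part1 cP1 Vne; rewrite P1V in partU ncU *.
  have VP : V \in [set V] :|: P2 by rewrite !inE eqxx.
  rewrite Phi_set1 (Phi_fold_final _ partU ncU VP VI Vp fin) setD1Ul.
    by rewrite setDv set0U.
  exact: block_notin_outer part2 _ Vne.
have [W WP1 [WI [t Wt]]] := exists_interval_block part1 nc1 cP1.
have WV := partitionS part1 WP1; have Wne := partition_block_neq0 part1 WP1.
have WSt := is_next_lift Wt VS VI Wne WV.
have WP : W \in P1 :|: P2 by rewrite inE WP1.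
have WP2 := block_notin_outer part2 WV Wne.
have [tV tW _] := Wt; have tnW := is_next_notin Wt.
have pt : p != t by apply: contraNneq pV => ->.
rewrite (Phi_fold _ partU WP (interval_trans VI WV WI) WSt) setD1Ul //.
rewrite (Phi_fold a part1 WP1 WI Wt) (IH (S :\: W) (V :\: W) (P1 :\ W)).
- rewrite setDDS //; apply: eq_Phi => // i /setDP[iS iV].
  have it : i != t by apply: contraNneq iV => ->.
  rewrite /upd; case: eqP => [e|_]; rewrite /fold_block ?(negbTE it) //.
  by rewrite (negbTE pt) ?e.
- exact: card_setD1_lt Hk WP1.
- exact: partitionD1.
- by apply: noncrossingS nc1; apply: subD1set.
- by rewrite setDDS.
- by apply: noncrossingS ncU; rewrite -setD1Ul //; apply: subD1set.
- exact: setSD.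
- by exists t; rewrite inE tnW.
- exact: interval_setD.
- exact: is_prev_setDD Vp Wt WV VI.
- exact: final_setDD fin Wt WV.
Qed.

Lemma Phi_setU_prev S V P1 P2 a p : partition P1 V -> noncrossing P1 ->
  partition P2 (S :\: V) -> noncrossing (P1 :|: P2) ->
  V \subset S -> (exists v, v \in V) -> is_interval S V -> is_prev S V p ->
  Phi S (P1 :|: P2) a = Phi (S :\: V) P2 (upd a p (a p * iota (Phi V P1 a))).
Proof.
move=> part1 nc1 part2 ncU VS Vne VI Vp.
case Vj: (next_after S V) => [j|]; last first.
  exact: Phi_setU_final part1 nc1 part2 ncU VS Vne VI Vp (next_after_None Vj).
have {}Vj := (next_afterP _ _ _).1 Vj.
rewrite (Phi_setU_next _ part1 nc1 part2 VS Vne VI Vj).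
by rewrite (Phi_upd_consec _ _ part2 (is_prev_next_consec VI Vp Vj Vne)).
Qed.

End PhiTheory.

(** * Moebius functions *)

Section Mobius.
Local Open Scope ring_scope.
Variables (T : finType) (dom : pred T) (le : rel T) (rank : T -> nat).
Hypothesis rank_lt : forall x y, dom x -> dom y -> le x y -> x != y -> (rank y < rank x)%N.
Hypothesis le_refl : forall x, dom x -> le x x.
Hypothesis le_trans : forall x y z, le x y -> le y z -> le x z.

Local Notation mu := (mobius_fuel dom le).

Lemma mobius_fuel_refl k x : mu k x x = 1.
Proof. by case: k => [|k] /=; rewrite eqxx. Qed.

Lemma mobius_fuel_stable x m : dom x -> forall y k k', dom y ->
  (rank x - rank y <= m)%N -> (m <= k)%N -> (m <= k')%N -> mu k x y = mu k' x y.
Proof.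
move=> dx; elim: m => [|m IH] y k k' dy hm hk hk'.
  have [<-|xy] := eqVneq x y; first by rewrite !mobius_fuel_refl.
  case lxy: (le x y).
    by have := rank_lt dx dy lxy xy; rewrite -subn_gt0 => /leq_trans /(_ hm).
  by case: k k' {hk hk'} => [|k] [|k'] /=; rewrite (negbTE xy) ?lxy.
have [<-|xy] := eqVneq x y; first by rewrite !mobius_fuel_refl.
case lxy: (le x y); last by case: k k' {hk hk'} => [|k] [|k'] /=; rewrite (negbTE xy) ?lxy.
case: k k' hk hk' => [|k] [|k'] //= hk hk'; rewrite (negbTE xy) lxy; congr (- _).
apply: eq_bigr => z /and4P[dz lxz lzy zy]; apply: (IH z) => //.
have ryz := rank_lt dz dy lzy zy.
have [<-|xz] := eqVneq x z; first by rewrite subnn.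
have rzx := rank_lt dx dz lxz xz; lia.
Qed.

Lemma mobius_fuel_sum x y N : dom x -> dom y -> le x y -> x != y -> (rank x <= N)%N ->
  \sum_(z | [&& dom z, le x z & le z y]) mu N x z = 0.
Proof.
move=> dx dy lxy xy hN; have ryx := rank_lt dx dy lxy xy.
case: N hN => [|N] hN; first by lia.
have muxy : mu N.+1 x y = - \sum_(z | [&& dom z, le x z, le z y & z != y]) mu N x z.
  by rewrite /= (negbTE xy) lxy.
rewrite (bigD1 y) ?muxy; last by rewrite dy lxy le_refl.
rewrite (eq_bigl (fun z => [&& dom z, le x z, le z y & z != y])); last first.
  by move=> z; rewrite !andbA.
have -> : \sum_(z | [&& dom z, le x z, le z y & z != y]) mu N.+1 x z =
          \sum_(z | [&& dom z, le x z, le z y & z != y]) mu N x z.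
  apply: eq_bigr => z /and4P[dz lxz lzy zy]; apply: (mobius_fuel_stable (m := N)) => //.
  have := rank_lt dz dy lzy zy; lia.
exact: addNr.
Qed.

Lemma mobius_fuel_unique (f : T -> int) x top N : dom x -> (rank x <= N)%N -> f x = 1 ->
  (forall y, dom y -> le x y -> le y top -> x != y ->
     \sum_(z | [&& dom z, le x z & le z y]) f z = 0) ->
  forall y, dom y -> le x y -> le y top -> f y = mu N x y.
Proof.
move=> dx hN fx Hf y.
have [m Hm] := ubnP (rank x - rank y); elim: m y Hm => // m IH y Hm dy lxy lyt.
have [<-|xy] := eqVneq x y; first by rewrite fx mobius_fuel_refl.
have ryx := rank_lt dx dy lxy xy.
have S1 := Hf y dy lxy lyt xy; have S2 := mobius_fuel_sum dx dy lxy xy hN.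
rewrite (bigD1 y) in S1; last by rewrite dy lxy le_refl.
rewrite (bigD1 y) in S2; last by rewrite dy lxy le_refl.
have eqrest : \sum_(z | [&& dom z, le x z & le z y] && (z != y)) f z =
              \sum_(z | [&& dom z, le x z & le z y] && (z != y)) mu N x z.
  apply: eq_bigr => z /andP[/and3P[dz lxz lzy] zy]; apply: IH => //; last exact: le_trans lzy lyt.
  have ryz := rank_lt dz dy lzy zy.
  have [<-|xz] := eqVneq x z; first by rewrite subnn; lia.
  have := rank_lt dx dz lxz xz; lia.
apply: (@addIr _ (\sum_(z | [&& dom z, le x z & le z y] && (z != y)) mu N x z)).
by rewrite -[X in _ + X = _]eqrest S1 S2.
Qed.

End Mobius.

(** * Splitting partitions at an interval block *)

Section Refinement.
Variable n : nat.
Implicit Types (S X Y : {set 'I_n}) (P Q : {set {set 'I_n}}).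

Lemma refinesP P Q :
  reflect (forall X, X \in P -> exists2 Y, Y \in Q & X \subset Y) (refines P Q).
Proof.
apply: (iffP forall_inP) => H X /H; first by case/exists_inP => Y; exists Y.
by case=> Y YQ XY; apply/exists_inP; exists Y.
Qed.

Lemma refines_refl P : refines P P.
Proof. by apply/refinesP => X XP; exists X. Qed.

Lemma refines_trans P Q R : refines P Q -> refines Q R -> refines P R.
Proof.
move=> /refinesP H1 /refinesP H2; apply/refinesP => X /H1 [Y /H2 [Z ZR YZ] XY].
by exists Z => //; apply: subset_trans XY YZ.
Qed.

Lemma refines_card_lt S P Q : partition P S -> partition Q S -> refines P Q -> P != Q ->
  (#|Q| < #|P|)%N.
Proof.
move=> partP partQ /refinesP ref PQ.
pose g Y := odflt set0 [pick X in P | X \subset Y].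
have gY Y : Y \in Q -> g Y \in P /\ g Y \subset Y.
  move=> YQ; rewrite /g; case: pickP => [X /andP[XP XY] //|H].
  have [y yY] := partition_block_neq0 partQ YQ.
  have [X XP yX] := partition_cover partP (subsetP (partitionS partQ YQ) y yY).
  have [Y' Y'Q XY'] := ref X XP.
  have e : Y' = Y by apply: (partition_block_eq partQ Y'Q YQ (subsetP XY' y yX) yY).
  by have := H X; rewrite XP -e XY'.
have ginj : {in Q &, injective g}.
  move=> Y1 Y2 Y1Q Y2Q e; have [g1P g1Y] := gY Y1 Y1Q; have [_ g2Y] := gY Y2 Y2Q.
  have [x xg] := partition_block_neq0 partP g1P.
  apply: (partition_block_eq partQ Y1Q Y2Q (subsetP g1Y x xg)).
  by rewrite e in xg; apply: (subsetP g2Y).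
have sub : g @: Q \subset P by apply/subsetP => X /imsetP[Y YQ ->]; case: (gY Y YQ).
rewrite ltn_neqAle -(card_in_imset ginj) subset_leq_card // andbT.
apply: contraNneq PQ => ceq.
have eq : g @: Q = P by apply/eqP; rewrite eqEcard sub ceq leqnn.
have gid Y : Y \in Q -> g Y = Y.
  move=> YQ; have [gP' gsub] := gY Y YQ; apply/eqP; rewrite eqEsubset gsub /=.
  apply/subsetP => y yY.
  have [X XP yX] := partition_cover partP (subsetP (partitionS partQ YQ) y yY).
  move: XP yX; rewrite -eq => /imsetP[Y' Y'Q ->] yX.
  have [_ gsub'] := gY Y' Y'Q.
  by rewrite -(partition_block_eq partQ Y'Q YQ (subsetP gsub' y yX) yY).
rewrite eqEsubset; apply/andP; split; apply/subsetP => X.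
  by rewrite -eq => /imsetP[Y YQ ->]; rewrite gid.
by move=> XQ; rewrite -eq -(gid X XQ); apply: imset_f.
Qed.

End Refinement.

Section INCSplit.
Local Open Scope ring_scope.
Variables (n : nat) (chi : 'I_n -> FB).
Implicit Types (S X Y : {set 'I_n}) (P Q z w : {set {set 'I_n}}).

Lemma inc_condP S P : reflect (forall X (v1 v2 w : 'I_n), X \in P -> v1 \in X -> v2 \in X ->
    w \in S -> (v1 < w)%N -> (w < v2)%N -> isB (chi w) -> w \in X) (inc_cond S chi P).
Proof.
apply: (iffP forall_inP) => [H X v1 v2 w XP v1X v2X wS v1w wv2 Bw|H X XP].
  move: (H X XP) => /forall_inP /(_ v1 v1X) /forall_inP /(_ v2 v2X) /forall_inP /(_ w wS).
  by rewrite v1w wv2 Bw => /implyP; apply.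
apply/forall_inP => v1 v1X; apply/forall_inP => v2 v2X.
apply/forall_inP => w wS; apply/implyP => /andP[/andP[v1w wv2] Bw].
exact: (H X v1 v2 w).
Qed.

Lemma INC_partition S P : INC S chi P -> partition P S.
Proof. by case/and3P. Qed.

Lemma INC_noncrossing S P : INC S chi P -> noncrossing P.
Proof. by case/and3P. Qed.

Lemma INC_sub S S' P Q : INC S chi P -> Q \subset P -> S' \subset S -> cover Q = S' ->
  INC S' chi Q.
Proof.
case/and3P => partP ncP /inc_condP icP QP S'S covQ; apply/and3P; split.
- by rewrite -covQ; apply: partition_cover_sub partP QP.
- exact: noncrossingS QP ncP.
- apply/inc_condP => X v1 v2 w XQ v1X v2X wS'.
  by apply: icP v1X v2X _; [apply: (subsetP QP) | apply: (subsetP S'S)].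
Qed.

Lemma INC_refines_card_lt S z w : INC S chi z -> INC S chi w -> refines z w -> z != w ->
  (#|w| < #|z|)%N.
Proof. by move=> /INC_partition partz /INC_partition; apply: refines_card_lt partz. Qed.

Lemma card_partition_le (z : {set {set 'I_n}}) : (#|z| <= #|{set {set 'I_n}}|)%N.
Proof.
apply: leq_trans (max_card _) _.
exact: (leq_card (fun x : {set 'I_n} => [set x]) (@set1_inj _)).
Qed.

Variables (pi : {set {set 'I_n}}) (V : {set 'I_n}).
Hypotheses (Hpi : INC [set: 'I_n] chi pi) (HV : V \in pi)
  (VI : is_interval [set: 'I_n] V).

Local Notation pi' := (part_restrict pi (~: V)).

Definition inner_blocks z := [set X in z | X \subset V].
Definition outer_blocks z := [set X in z | ~~ (X \subset V)].

Let partpi := INC_partition Hpi.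

Lemma inner_outer_blocksU z : inner_blocks z :|: outer_blocks z = z.
Proof. by apply/setP => X; rewrite !inE -andb_orr orbN andbT. Qed.

Lemma pi_block_disjoint Y : Y \in pi -> Y != V -> [disjoint Y & V].
Proof. by move=> YP; apply: partition_disjoint partpi YP HV. Qed.

Lemma pi_block_subV Y : Y \in pi -> (Y \subset V) = (Y == V).
Proof.
move=> YP; have [->|YV] := eqVneq Y V; first exact: subxx.
have [y yY] := partition_block_neq0 partpi YP; apply/negP => /subsetP /(_ y yY) yV.
by have := disjointFr (pi_block_disjoint YP YV) yY; rewrite yV.
Qed.

Lemma part_restrict_pi : pi' = [set X in pi | X != V].
Proof.
have setCK Y : Y \in pi -> Y != V -> Y :&: ~: V = Y.
  by move=> YP YV; rewrite -setDE; apply/setDidPl/pi_block_disjoint.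
apply/setP => X; rewrite inE; apply/imsetP/andP => [[Y]|[XP XV]].
  rewrite inE => /andP[YP Yne] ->.
  have YV : Y != V by apply: contraNneq Yne => ->; rewrite setICr.
  by rewrite setCK.
exists X; last by rewrite setCK.
rewrite inE XP setCK //=; exact/set0Pn/(partition_block_neq0 partpi XP).
Qed.

Lemma outer_blocks_pi : outer_blocks pi = pi'.
Proof.
rewrite part_restrict_pi; apply/setP => X; rewrite !inE.
by case XP: (X \in pi) => //=; rewrite pi_block_subV.
Qed.

Lemma inner_blocks_pi : inner_blocks pi = [set V].
Proof.
apply/setP => X; rewrite !inE; have [->|XV] := eqVneq X V; first by rewrite HV subxx.
by case XP: (X \in pi) => //=; rewrite pi_block_subV // (negbTE XV).
Qed.

Lemma outer_block_subC z X : refines z pi -> X \in z -> ~~ (X \subset V) -> X \subset ~: V.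
Proof.
move=> /refinesP ref XP XV; have [Y YP XY] := ref X XP.
have YV : Y != V by apply: contraNneq XV => <-.
apply/subsetP => x xX; rewrite inE; apply/negP => xV.
by have := disjointFr (pi_block_disjoint YP YV) (subsetP XY x xX); rewrite xV.
Qed.

Lemma cover_inner_blocks z : partition z [set: 'I_n] -> refines z pi ->
  cover (inner_blocks z) = V.
Proof.
move=> partz ref; apply/setP => x; apply/bigcupP/idP => [[X] /setIdP[_ /subsetP]|xV].
  by apply.
have [X XP xX] := partition_cover partz (in_setT x); exists X => //; rewrite inE XP /=.
apply/negPn/negP => XV.
by have := subsetP (outer_block_subC ref XP XV) x xX; rewrite inE xV.
Qed.

Lemma cover_outer_blocks z : partition z [set: 'I_n] -> refines z pi ->
  cover (outer_blocks z) = ~: V.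
Proof.
move=> partz ref; apply/setP => x; apply/bigcupP/idP => [[X] /setIdP[XP XV] xX|xV].
  exact: (subsetP (outer_block_subC ref XP XV)).
have [X XP xX] := partition_cover partz (in_setT x); exists X => //; rewrite inE XP /=.
by apply/negP => /subsetP /(_ x xX); rewrite inE in xV; apply/negP.
Qed.

Lemma INC_split z : INC [set: 'I_n] chi z -> refines z pi ->
  [/\ INC V chi (inner_blocks z), INC (~: V) chi (outer_blocks z)
    & refines (outer_blocks z) pi'].
Proof.
move=> Hz ref; have partz := INC_partition Hz.
split.
- by apply: INC_sub Hz _ (subsetT V) (cover_inner_blocks partz ref); apply/subsetP => X /setIdP[].
- by apply: INC_sub Hz _ (subsetT _) (cover_outer_blocks partz ref); apply/subsetP => X /setIdP[].
- apply/refinesP => X /setIdP[XP XV]; have [Y YP XY] := (refinesP _ _ ref) X XP.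
  by exists Y => //; rewrite part_restrict_pi inE YP; apply: contraNneq XV => <-.
Qed.

Lemma INC_setU z1 z2 : INC V chi z1 -> INC (~: V) chi z2 -> refines z2 pi' ->
  INC [set: 'I_n] chi (z1 :|: z2) && refines (z1 :|: z2) pi.
Proof.
move=> /and3P[part1 /noncrossingP nc1 /inc_condP ic1].
move=> /and3P[part2 /noncrossingP nc2 /inc_condP ic2].
move=> /refinesP ref2; move/inc_condP: (let: And3 _ _ ic := and3P Hpi in ic) => icpi.
move/intervalP: VI => VI'; have sub1 := partitionS part1; have sub2 := partitionS part2.
have notV (x : 'I_n) X : X \in z2 -> x \in X -> x \notin V.
  by move=> XP xX; have := subsetP (sub2 X XP) x xX; rewrite inE.
have pr2 Y : Y \in pi' -> Y \in pi /\ Y != V by rewrite part_restrict_pi inE => /andP[].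
apply/andP; split; last first.
  apply/refinesP => X /setUP[XP|XP]; first by exists V => //; apply: sub1.
  by have [Y YP XY] := ref2 X XP; exists Y => //; case: (pr2 Y YP).
apply/and3P; split.
- by apply: partitionU part1 _ (subsetT V); rewrite setTD.
- apply/noncrossingP => X Y a b c d /setUP[XP|XP] /setUP[YP|YP] aX cX bY dY ab bc cd.
  + exact: (nc1 X Y a b c d).
  + have aV := subsetP (sub1 X XP) a aX; have cV := subsetP (sub1 X XP) c cX.
    have := VI' b a c (in_setT b) aV cV (ltnW ab) (ltnW bc).
    by rewrite (negbTE (notV b Y YP bY)).
  + have bV := subsetP (sub1 Y YP) b bY; have dV := subsetP (sub1 Y YP) d dY.
    have := VI' c b d (in_setT c) bV dV (ltnW bc) (ltnW cd).
    by rewrite (negbTE (notV c X XP cX)).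
  + exact: (nc2 X Y a b c d).
- apply/inc_condP => X v1 v2 w /setUP[XP|XP] v1X v2X _ v1w wv2 Bw.
    have v1V := subsetP (sub1 X XP) v1 v1X; have v2V := subsetP (sub1 X XP) v2 v2X.
    have wV := VI' w v1 v2 (in_setT w) v1V v2V (ltnW v1w) (ltnW wv2).
    exact: (ic1 X v1 v2 w XP v1X v2X wV v1w wv2 Bw).
  have [wV|wV] := boolP (w \in V); last first.
    by apply: (ic2 X v1 v2 w XP v1X v2X) => //; rewrite inE.
  have [Y YP XY] := ref2 X XP; have [YP' YV] := pr2 Y YP.
  have := icpi Y v1 v2 w YP' (subsetP XY v1 v1X) (subsetP XY v2 v2X) (in_setT w) v1w wv2 Bw.
  by move/(disjointFr (pi_block_disjoint YP' YV)); rewrite wV.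
Qed.

Lemma inner_outer_blocks_setU z1 z2 : INC V chi z1 -> INC (~: V) chi z2 ->
  inner_blocks (z1 :|: z2) = z1 /\ outer_blocks (z1 :|: z2) = z2.
Proof.
move=> /INC_partition part1 /INC_partition part2.
have out X : X \in z2 -> ~~ (X \subset V).
  move=> XP; have [x xX] := partition_block_neq0 part2 XP; apply/negP => /subsetP /(_ x xX) xV.
  by have := subsetP (partitionS part2 XP) x xX; rewrite inE xV.
have inn X : X \in z1 -> X \subset V by apply: partitionS part1.
split; apply/setP => X; rewrite !inE.
- have [X1|X1] := boolP (X \in z1); first by rewrite inn.
  by have [X2|X2] := boolP (X \in z2); rewrite //= (negbTE (out X X2)).
- have [X2|X2] := boolP (X \in z2); first by rewrite orbT out.
  by have [X1|X1] := boolP (X \in z1); rewrite //= inn.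
Qed.

Lemma refines_split z w : INC [set: 'I_n] chi z -> refines z pi ->
  INC [set: 'I_n] chi w -> refines w pi ->
  refines z w = refines (inner_blocks z) (inner_blocks w)
                && refines (outer_blocks z) (outer_blocks w).
Proof.
move=> Hz rz Hw rw; have partz := INC_partition Hz.
apply/idP/andP => [/refinesP H|[/refinesP H1 /refinesP H2]].
  split; apply/refinesP => X /setIdP[XP XV]; have [Y YP XY] := H X XP;
    exists Y => //; rewrite inE YP /=.
  - have [x xX] := partition_block_neq0 partz XP.
    have [Z ZP YZ] := (refinesP _ _ rw) Y YP.
    have xZ := subsetP YZ x (subsetP XY x xX).
    by rewrite -(partition_block_eq partpi ZP HV xZ (subsetP XV x xX)).
  - by apply: contra XV => YV; apply: subset_trans XY YV.
apply/refinesP => X; rewrite -{1}(inner_outer_blocksU z) => /setUP[/H1|/H2] [Y];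
  by move=> /setIdP[YP _] XY; exists Y.
Qed.

Lemma sum_INC_split (M : nmodType) (G : {set {set 'I_n}} -> {set {set 'I_n}} -> M)
    (Q : {set {set 'I_n}} -> {set {set 'I_n}} -> bool) :
  \sum_(z | INC [set: 'I_n] chi z && refines z pi && Q (inner_blocks z) (outer_blocks z))
     G (inner_blocks z) (outer_blocks z)
  = \sum_(z1 | INC V chi z1) \sum_(z2 | INC (~: V) chi z2 && refines z2 pi' && Q z1 z2)
       G z1 z2.
Proof.
rewrite pair_big_dep (reindex_onto (fun z => (inner_blocks z, outer_blocks z))
  (fun p => p.1 :|: p.2)) /=; last first.
  move=> [z1 z2] /= /andP[H1 /andP[/andP[H2 _] _]].
  by have [-> ->] := inner_outer_blocks_setU H1 H2.
apply: eq_bigl => z; rewrite inner_outer_blocksU eqxx andbT; apply/idP/idP.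
  move=> /andP[/andP[Hz rz] Qz]; have [H1 H2 H3] := INC_split Hz rz.
  by rewrite H1 H2 H3 Qz.
move=> /andP[H1 /andP[/andP[H2 H3] Qz]]; rewrite Qz andbT.
by have := INC_setU H1 H2 H3; rewrite inner_outer_blocksU.
Qed.

Lemma sum_refines_interval_split (F1 F2 : {set {set 'I_n}} -> int) z y :
  INC [set: 'I_n] chi z -> refines z pi -> INC [set: 'I_n] chi y -> refines y pi ->
  \sum_(w | [&& INC [set: 'I_n] chi w, refines z w & refines w y])
     F1 (inner_blocks w) * F2 (outer_blocks w)
  = (\sum_(w1 | [&& INC V chi w1, refines (inner_blocks z) w1 & refines w1 (inner_blocks y)])
       F1 w1)
    * (\sum_(w2 | [&& INC (~: V) chi w2, refines (outer_blocks z) w2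
                    & refines w2 (outer_blocks y)]) F2 w2).
Proof.
move=> Hz rz Hy ry; have [_ _ ry2] := INC_split Hy ry.
pose Qf w1 w2 := [&& refines (inner_blocks z) w1, refines w1 (inner_blocks y),
  refines (outer_blocks z) w2 & refines w2 (outer_blocks y)].
rewrite (eq_bigl (fun w => INC [set: 'I_n] chi w && refines w pi
                     && Qf (inner_blocks w) (outer_blocks w))); last first.
  move=> w; have [Hw|] //= := boolP (INC _ chi w).
  have [rw|rw] /= := boolP (refines w pi).
    rewrite (refines_split Hz rz Hw rw) (refines_split Hw rw Hy ry) /Qf.
    by rewrite -!andbA; do !bool_congr.
  by apply/negbTE; apply: contra rw => /andP[_ /refines_trans]; apply.
rewrite (sum_INC_split (fun w1 w2 => F1 w1 * F2 w2) Qf) mulr_suml.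
rewrite [LHS]big_mkcond [RHS]big_mkcond /=; apply: eq_bigr => w1 _.
case: (INC V chi w1) => //=.
have [/andP[zw1 w1y]|nA] := boolP (refines (inner_blocks z) w1 && refines w1 (inner_blocks y)).
  rewrite mulr_sumr; apply: eq_bigl => w2; rewrite /Qf zw1 w1y /=.
  have [w2y|] := boolP (refines w2 (outer_blocks y)); last by rewrite !andbF.
  by rewrite (refines_trans w2y ry2) !andbT.
apply: big_pred0 => w2; rewrite /Qf; move: nA; rewrite negb_and.
by case/orP => /negbTE ->; rewrite ?andbF.
Qed.

Lemma mobius_split z : INC [set: 'I_n] chi z -> refines z pi ->
  mobius (INC [set: 'I_n] chi) (@refines n) z pi
  = mobius (INC V chi) (@refines n) (inner_blocks z) [set V]
    * mobius (INC (~: V) chi) (@refines n) (outer_blocks z) pi'.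
Proof.
move=> Hz rz; have [Hz1 Hz2 _] := INC_split Hz rz.
have rank_lt S := @INC_refines_card_lt S.
have refl S x (_ : INC S chi x) := refines_refl x.
pose f w := mobius (INC V chi) (@refines n) (inner_blocks z) (inner_blocks w)
            * mobius (INC (~: V) chi) (@refines n) (outer_blocks z) (outer_blocks w).
rewrite -inner_blocks_pi -outer_blocks_pi; symmetry; rewrite /mobius.
apply: (mobius_fuel_unique (rank_lt _) (refl _) (@refines_trans n) (f := f) (top := pi)) => //;
  [exact: card_partition_le | by rewrite /f /mobius !mobius_fuel_refl mulr1 | |
   exact: refines_refl].
move=> y Hy zy ypi nzy; rewrite (sum_refines_interval_split _ _ Hz rz Hy ypi).
have [Hy1 Hy2 _] := INC_split Hy ypi.
move: zy; rewrite (refines_split Hz rz Hy ypi) => /andP[zy1 zy2].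
have [e1|n1] := eqVneq (inner_blocks z) (inner_blocks y); last first.
  by rewrite (mobius_fuel_sum (rank_lt _) (refl _) Hz1 Hy1 zy1 n1) ?mul0r ?card_partition_le.
have n2 : outer_blocks z != outer_blocks y.
  apply: contraNneq nzy => e2.
  by rewrite -(inner_outer_blocksU z) -(inner_outer_blocksU y) e1 e2.
by rewrite [X in _ * X](mobius_fuel_sum (rank_lt _) (refl _) Hz2 Hy2 zy2 n2) ?mulr0
  ?card_partition_le.
Qed.

End INCSplit.

(** * Factorization of the cumulant *)

Section KappaFactor.
Local Open Scope ring_scope.

Lemma morph_mulrz (U W : zmodType) (F : U -> W) :
  {morph F : x y / x + y} -> forall x m, F (x *~ m) = F x *~ m.
Proof.
move=> FD; have F0 : F 0 = 0 by apply: (addrI (F 0)); rewrite -FD !addr0.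
have FN x : F (- x) = - F x by apply: (addrI (F x)); rewrite -FD !subrr.
have FMn x k : F (x *+ k) = F x *+ k by elim: k => [|k IH]; rewrite ?mulr0n // !mulrS FD IH.
by move=> x [k|k]; rewrite ?NegzE ?mulrNz ?FN -!pmulrn FMn.
Qed.

Variables (R : realType) (Bt A : algType R[i]).
Variable iota : {rmorphism Bt -> A}.
Variable E : {additive A -> Bt}.
Variables (n : nat) (chi : 'I_n -> FB).

Local Notation Phi := (Phi iota E).
Local Notation kappa := (kappa iota E).

Lemma eq_kappa (S : {set 'I_n}) P (a b : 'I_n -> A) :
  {in S, a =1 b} -> kappa S chi P a = kappa S chi P b.
Proof.
move=> ab; apply: eq_bigr => sigma /andP[/INC_partition partsigma _].
by rewrite (eq_Phi _ _ partsigma ab).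
Qed.

Variables (pi : {set {set 'I_n}}) (V : {set 'I_n}).
Hypotheses (Hpi : INC [set: 'I_n] chi pi) (HV : V \in pi) (VI : is_interval [set: 'I_n] V).
Local Notation pi' := (part_restrict pi (~: V)).
Local Notation mu S P Q := (mobius (INC S chi) (@refines n) P Q).

Section FactorPhi.
Variables (a : 'I_n -> A) (g : Bt -> 'I_n -> A).
Hypothesis Phi_factor : forall z, INC [set: 'I_n] chi z -> refines z pi ->
  Phi [set: 'I_n] z a = Phi (~: V) (outer_blocks V z) (g (Phi V (inner_blocks V z) a)).
Hypothesis Phi_gD : forall z2, INC (~: V) chi z2 ->
  {morph (fun b => Phi (~: V) z2 (g b)) : x y / x + y}.

Lemma kappa_factor :
  kappa [set: 'I_n] chi pi a = kappa (~: V) chi pi' (g (kappa V chi [set V] a)).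
Proof.
have Phi_g_sum z2 : INC (~: V) chi z2 ->
    Phi (~: V) z2 (g (\sum_(z1 | INC V chi z1 && refines z1 [set V]) Phi V z1 a *~ mu V z1 [set V]))
    = \sum_(z1 | INC V chi z1 && refines z1 [set V])
        Phi (~: V) z2 (g (Phi V z1 a)) *~ mu V z1 [set V].
  move=> Hz2; have FD := Phi_gD Hz2.
  have F0 : Phi (~: V) z2 (g 0) = 0 by apply: (addrI (Phi (~: V) z2 (g 0))); rewrite -FD !addr0.
  by rewrite (big_morph _ FD F0); apply: eq_bigr => z1 _; apply: (morph_mulrz FD).
rewrite /kappa (eq_bigr (fun z => Phi (~: V) (outer_blocks V z) (g (Phi V (inner_blocks V z) a))
    *~ (mu V (inner_blocks V z) [set V] * mu (~: V) (outer_blocks V z) pi'))); last first.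
  by move=> z /andP[Hz rz]; rewrite Phi_factor // (mobius_split Hpi HV VI Hz rz).
rewrite (eq_bigl (fun z => INC [set: 'I_n] chi z && refines z pi && true)); last first.
  by move=> z; rewrite andbT.
rewrite (sum_INC_split Hpi HV VI
  (fun z1 z2 => Phi (~: V) z2 (g (Phi V z1 a)) *~ (mu V z1 [set V] * mu (~: V) z2 pi'))
  (fun _ _ => true)).
rewrite [RHS](eq_bigr (fun z2 => \sum_(z1 | INC V chi z1 && refines z1 [set V])
    Phi (~: V) z2 (g (Phi V z1 a)) *~ mu V z1 [set V] *~ mu (~: V) z2 pi')); last first.
  by move=> z2 /andP[Hz2 _]; rewrite Phi_g_sum // mulrz_suml.
rewrite exchange_big /=; apply: eq_big => [z2|z2 _]; first by rewrite andbT.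
apply: eq_big => [z1|z1 _]; last by rewrite mulrzA.
have [H1|] //= := boolP (INC V chi z1); apply/esym/refinesP => X XP.
by exists V; rewrite ?inE //; apply: partitionS (INC_partition H1) XP.
Qed.

End FactorPhi.

Hypothesis E_bimod : forall (b1 b2 : Bt) (x : A), E (iota b1 * x * iota b2) = b1 * E x * b2.
Let Vne := partition_block_neq0 (INC_partition Hpi) HV.

Lemma kappa_factor_next a j : is_next [set: 'I_n] V j ->
  kappa [set: 'I_n] chi pi a
  = kappa (~: V) chi pi' (upd a j (iota (kappa V chi [set V] a) * a j)).
Proof.
move=> Vj; apply: (kappa_factor (g := fun b => upd a j (iota b * a j))).
  move=> z Hz rz; have [H1 H2 _] := INC_split Hpi HV Hz rz.
  rewrite -{1}(inner_outer_blocksU V z) -setTD.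
  by apply: Phi_setU_next; rewrite ?setTD ?subsetT //;
    [apply: INC_partition H1 | apply: INC_noncrossing H1 | apply: INC_partition H2].
move=> z2 /INC_partition part2 x y /=.
by rewrite rmorphD mulrDl (Phi_updD _ _ _ _ _ part2) // inE (is_next_notin Vj).
Qed.

Lemma kappa_factor_prev a p : is_prev [set: 'I_n] V p ->
  kappa [set: 'I_n] chi pi a
  = kappa (~: V) chi pi' (upd a p (a p * iota (kappa V chi [set V] a))).
Proof.
move=> Vp; apply: (kappa_factor (g := fun b => upd a p (a p * iota b))).
  move=> z Hz rz; have [H1 H2 _] := INC_split Hpi HV Hz rz.
  rewrite -{1}(inner_outer_blocksU V z) -setTD.
  by apply: Phi_setU_prev; rewrite ?setTD ?subsetT ?inner_outer_blocksU //;
    [apply: INC_partition H1 | apply: INC_noncrossing H1 | apply: INC_partition H2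
    | apply: INC_noncrossing Hz].
move=> z2 /INC_partition part2 x y /=.
by rewrite rmorphD mulrDr (Phi_updD _ _ _ _ _ part2) // inE (is_prev_notin Vp).
Qed.

End KappaFactor.

Local Open Scope ring_scope.

Theorem theorem4p2 (R : realType) (Bt A : algType R[i])
  (iota : {lrmorphism Bt -> A}) (iota_inj : injective iota)
  (E : {linear A -> Bt})
  (E_bimod : forall (b1 b2 : Bt) (x : A), E (iota b1 * x * iota b2) = b1 * E x * b2)
  (n : nat) (chi : 'I_n -> FB) (pi : {set {set 'I_n}})
  (Hpi : INC [set: 'I_n] chi pi) (a : 'I_n -> A) (l s : nat)
  (HV : [set i : 'I_n | (l <= i < l + s)%N] \in pi) :
  let V := [set i : 'I_n | (l <= i < l + s)%N] in
  let V' := ~: V in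
  let kV := kappa iota E V chi [set V] a in
  (forall j : 'I_n, nat_of_ord j = (l + s)%N ->
     kappa iota E [set: 'I_n] chi pi a
     = kappa iota E V' chi (part_restrict pi V')
         (fun i => if i == j then iota kV * a i else a i))
  /\
  (forall j : 'I_n, (nat_of_ord j).+1 = l ->
     kappa iota E [set: 'I_n] chi pi a
     = kappa iota E V' chi (part_restrict pi V')
         (fun i => if i == j then a i * iota kV else a i)).
Proof.
move=> V V' kV; have VI := interval_range n l s.
have [v vV] := partition_block_neq0 (INC_partition Hpi) HV.
split=> [j hj|p hp].
  rewrite (kappa_factor_next Hpi HV VI E_bimod a (is_next_range vV hj)).
  by apply: eq_kappa => i _; rewrite /upd; case: eqP => // ->.
rewrite (kappa_factor_prev Hpi HV VI E_bimod a (is_prev_range vV hp)).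
by apply: eq_kappa => i _; rewrite /upd; case: eqP => // ->.
Qed.
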